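(* Let $k\ge1$ and let $\mu_k$ be an LTI probability measure on $\{0,1\}^{\{0,\ldots,k\}}$. Then every translation invariant probability measure on $\{0,1\}^{\mathbb{Z}}$ which has marginal $\mu_k$ on coordinates $0,\ldots,k$ and has minimal total entropy among all such measures is a finite convex combination of BPC measures.
   Context: Total entropy: $S(\mu)=\lim_{j\to\infty}S(\pi_j\mu)$, $\pi_j\mu$ the marginal on coordinates $0,\ldots,j$, $S$ the Gibbs–Shannon entropy. A BPC measure is a measure giving mass $1/p$ to each of the $p$ translates of a single periodic configuration of minimal period $p$. LTI: for $A,A'\subset\{0,\ldots,k\}$ with $A'$ a translate of $A$, the marginal on $\{0,1\}^{A'}$ is the translate of that on $\{0,1\}^A$. *)

From Stdlib Require Import Reals List Bool.
Import ListNotations.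
Open Scope R_scope.

Definition word := list bool.

Fixpoint words (n : nat) : list word :=
  match n with
  | O => [nil]
  | S n' => flat_map (fun w => [false :: w; true :: w]) (words n')
  end.

Definition sumR {A : Type} (l : list A) (f : A -> R) : R :=
  fold_right (fun a acc => f a + acc) 0 l.

(* A translation invariant probability measure on {0,1}^Z, given by its
   cylinder probabilities: p w = mu([w] placed at any position n).
   By Kolmogorov extension these data correspond bijectively to
   translation invariant Borel probability measures on {0,1}^Z. *)
Definition is_ti_prob (p : word -> R) : Prop :=
  p nil = 1 /\
  (forall w, 0 <= p w) /\
  (forall w, p w = p (w ++ [false]) + p (w ++ [true])) /\
  (forall w, p w = p (false :: w) + p (true :: w)).

(* Probability measure on {0,1}^{0..k}: q on words of length k+1. *)
Definition is_prob_block (k : nat) (q : word -> R) : Prop :=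
  (forall w, In w (words (S k)) -> 0 <= q w) /\
  sumR (words (S k)) q = 1.

(* Marginal of q (on {0,1}^{0..k}) on the coordinate set given by the list
   of indices A, evaluated at the assignment x (x_i is the value at A_i). *)
Definition block_marginal (k : nat) (q : word -> R) (A : list nat) (x : word) : R :=
  sumR (words (S k)) (fun w =>
    if list_eq_dec bool_dec (map (fun a => nth a w false) A) x then q w else 0).

Definition is_LTI (k : nat) (q : word -> R) : Prop :=
  forall (A : list nat) (t : nat),
    (forall a, In a A -> (a + t <= k)%nat) ->
    forall x : word,
      block_marginal k q A x = block_marginal k q (map (fun a => (a + t)%nat) A) x.

Definition has_marginal (k : nat) (p q : word -> R) : Prop :=
  forall w, In w (words (S k)) -> p w = q w.

Definition plogp (x : R) : R := if Rle_dec x 0 then 0 else x * ln x.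

Definition marg_entropy (p : word -> R) (j : nat) : R :=
  - sumR (words (S j)) (fun w => plogp (p w)).

(* Extended nonnegative values: Some x = finite, None = +infinity. *)
Definition has_total_entropy (p : word -> R) (s : option R) : Prop :=
  match s with
  | Some l => Un_cv (marg_entropy p) l
  | None => cv_infty (marg_entropy p)
  end.

Definition ext_le (a b : option R) : Prop :=
  match a, b with
  | _, None => True
  | None, Some _ => False
  | Some x, Some y => x <= y
  end.

(* Periodic configurations: c : nat -> bool of minimal period per
   (a periodic bi-infinite configuration is determined by its restriction
   to nat). *)
Definition min_period (c : nat -> bool) (per : nat) : Prop :=
  (0 < per)%nat /\ (forall n, c (n + per)%nat = c n) /\
  (forall r, (0 < r < per)%nat -> ~ (forall n, c (n + r)%nat = c n)).

Fixpoint matches_at (c : nat -> bool) (i : nat) (w : word) : bool :=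
  match w with
  | nil => true
  | b :: w' => Bool.eqb (c i) b && matches_at c (S i) w'
  end.

(* Cylinder probabilities of the BPC measure: mass 1/per on each of the per
   translates of c. *)
Definition bpc_prob (c : nat -> bool) (per : nat) (w : word) : R :=
  / INR per * INR (length (filter (fun i => matches_at c i w) (seq 0 per))).

Definition is_finite_convex_comb_BPC (p : word -> R) : Prop :=
  exists l : list (R * ((nat -> bool) * nat)),
    (forall e, In e l -> 0 <= fst e /\ min_period (fst (snd e)) (snd (snd e))) /\
    sumR l fst = 1 /\
    forall w, p w = sumR l (fun e => fst e * bpc_prob (fst (snd e)) (snd (snd e)) w).

(* If the marginal entropies of a translation invariant measure [mu] stay below
   [L], then every nonzero consistent residual [rho <= mu] gives mass at least
   some [eta > 0] to a word of every length (the light words carry little mass,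
   as each costs entropy at least [-ln eps]).  König's lemma puts these words
   on one configuration; as only [rho [] / eta] words of a given length can be
   that heavy, the configuration is eventually periodic, and [rho] dominates a
   multiple of a BPC measure whose residual tends to [0] along the period.
   Subtracting such components one at a time produces BPC measures on pairwise
   distinct orbits.  There cannot be more of them than the [2^(k+1)] words of
   length [k+1]: otherwise a nontrivial combination [D] of them vanishes on
   these words, [mu + D] and [mu - D] have the same marginal, and strict
   convexity of [x ln x] on long prefixes of a periodic configuration where
   [D <> 0] makes one of them of smaller total entropy.  So the residual
   vanishes after finitely many steps.  Infinite minimal entropy is excluded:
   decomposing the [k+1]-marginal into cycles of the de Bruijn graph gives an
   extension by finitely many BPC measures, whose atoms are bounded below. *)

From Stdlib Require Import Reals List Bool Lra Lia Classical ClassicalEpsilon.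
Import ListNotations.
Open Scope R_scope.

Lemma sumR_cons {A} a l (f : A -> R) : sumR (a :: l) f = f a + sumR l f.
Proof. reflexivity. Qed.

Lemma sumR_app {A} l1 l2 (f : A -> R) : sumR (l1 ++ l2) f = sumR l1 f + sumR l2 f.
Proof. induction l1 as [|a l1 IH]; simpl; [lra|]. rewrite IH; lra. Qed.

Lemma sumR_ext {A} l (f g : A -> R) :
  (forall x, In x l -> f x = g x) -> sumR l f = sumR l g.
Proof.
  induction l as [|a l IH]; intros H; simpl; auto.
  rewrite H, IH; auto using in_eq, in_cons.
Qed.

Lemma sumR_le {A} l (f g : A -> R) :
  (forall x, In x l -> f x <= g x) -> sumR l f <= sumR l g.
Proof.
  induction l as [|a l IH]; intros H; simpl; [lra|].
  apply Rplus_le_compat; auto using in_eq, in_cons.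
Qed.

Lemma sumR_plus {A} l (f g : A -> R) :
  sumR l (fun x => f x + g x) = sumR l f + sumR l g.
Proof. induction l as [|a l IH]; simpl; [lra|]. rewrite IH; lra. Qed.

Lemma sumR_minus {A} l (f g : A -> R) :
  sumR l (fun x => f x - g x) = sumR l f - sumR l g.
Proof. induction l as [|a l IH]; simpl; [lra|]. rewrite IH; lra. Qed.

Lemma sumR_scal {A} l (f : A -> R) c : sumR l (fun x => c * f x) = c * sumR l f.
Proof. induction l as [|a l IH]; simpl; [lra|]. rewrite IH; lra. Qed.

Lemma sumR_opp {A} l (f : A -> R) : sumR l (fun x => - f x) = - sumR l f.
Proof. induction l as [|a l IH]; simpl; [lra|]. rewrite IH; lra. Qed.

Lemma sumR_const {A} (l : list A) c : sumR l (fun _ => c) = INR (length l) * c.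
Proof.
  induction l as [|a l IH]; simpl length; [simpl; lra|].
  rewrite sumR_cons, IH, S_INR; lra.
Qed.

Lemma sumR_zero {A} l (f : A -> R) : (forall x, In x l -> f x = 0) -> sumR l f = 0.
Proof. intros H. rewrite (sumR_ext l f (fun _ => 0)) by auto. rewrite sumR_const; lra. Qed.

Lemma sumR_nonneg {A} l (f : A -> R) : (forall x, In x l -> 0 <= f x) -> 0 <= sumR l f.
Proof. intros H. rewrite <- (sumR_zero l (fun _ => 0)) by auto. apply sumR_le; auto. Qed.

Lemma sumR_map {A B} (g : A -> B) l (f : B -> R) :
  sumR (map g l) f = sumR l (fun x => f (g x)).
Proof. induction l as [|a l IH]; simpl; auto. rewrite IH; auto. Qed.

Lemma sumR_flat_map {A B} (g : A -> list B) l (f : B -> R) :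
  sumR (flat_map g l) f = sumR l (fun x => sumR (g x) f).
Proof. induction l as [|a l IH]; simpl; auto. rewrite sumR_app, IH; auto. Qed.

Lemma sumR_term_le {A} l (f : A -> R) x :
  In x l -> (forall y, In y l -> 0 <= f y) -> f x <= sumR l f.
Proof.
  induction l as [|a l IH]; intros Hx H; [destruct Hx|]. rewrite sumR_cons.
  assert (0 <= f a) by auto using in_eq.
  assert (0 <= sumR l f) by (apply sumR_nonneg; auto using in_cons).
  destruct Hx as [<-|Hx]; [lra|].
  assert (f x <= sumR l f) by (apply IH; auto using in_cons). lra.
Qed.

Lemma sumR_le_gap {A} l (f g : A -> R) x c :
  In x l -> (forall y, In y l -> g y <= f y) -> g x + c <= f x ->
  sumR l g + c <= sumR l f.
Proof.
  induction l as [|a l IH]; intros Hx H Hc; [destruct Hx|]. rewrite !sumR_cons.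
  destruct Hx as [<-|Hx].
  - assert (sumR l g <= sumR l f) by (apply sumR_le; auto using in_cons). lra.
  - assert (g a <= f a) by auto using in_eq.
    assert (sumR l g + c <= sumR l f) by (apply IH; auto using in_cons). lra.
Qed.

Lemma sumR_remove {A} (dec : forall x y : A, {x = y} + {x <> y}) l (f : A -> R) a :
  NoDup l -> In a l -> sumR l f = f a + sumR (remove dec a l) f.
Proof.
  induction l as [|b l IH]; intros Hn Ha; [destruct Ha|]. inversion Hn; subst. simpl remove.
  destruct Ha as [<-|Ha].
  - destruct (dec b b) as [_|C]; [|congruence]. rewrite notin_remove; auto.
  - destruct (dec a b) as [->|Ne]; [contradiction|]. rewrite !sumR_cons, (IH H2 Ha). lra.
Qed.

Lemma NoDup_remove_dec {A} (dec : forall x y : A, {x = y} + {x <> y}) a l :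
  NoDup l -> NoDup (remove dec a l).
Proof.
  induction l as [|b l IH]; intros Hn; simpl; auto. inversion Hn; subst.
  destruct (dec a b); auto. constructor; auto. intros Hc. apply in_remove in Hc. tauto.
Qed.

Lemma length_remove_NoDup (a : nat) l :
  NoDup l -> In a l -> S (length (remove Nat.eq_dec a l)) = length l.
Proof.
  induction l as [|b l IH]; intros Hn Ha; [destruct Ha|]. inversion Hn; subst. simpl.
  destruct (Nat.eq_dec a b) as [->|Ne].
  - rewrite notin_remove; auto.
  - destruct Ha as [->|Ha]; [congruence|]. simpl. rewrite IH; auto.
Qed.

Lemma sumR_incl_le {A} (dec : forall x y : A, {x = y} + {x <> y}) l l' (f : A -> R) :
  NoDup l' -> incl l' l -> (forall x, In x l -> 0 <= f x) -> sumR l' f <= sumR l f.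
Proof.
  revert l'; induction l as [|a l IH]; intros l' Hn Hincl H.
  - destruct l' as [|b l']; [simpl; lra|]. destruct (Hincl b (in_eq _ _)).
  - rewrite sumR_cons. assert (0 <= f a) by auto using in_eq.
    destruct (in_dec dec a l') as [Ha|Ha].
    + rewrite (sumR_remove dec l' f a Hn Ha).
      enough (sumR (remove dec a l') f <= sumR l f) by lra.
      apply IH; auto using NoDup_remove_dec, in_cons.
      intros y Hy. apply in_remove in Hy as [Hy Ne]. destruct (Hincl y Hy); [congruence|auto].
    + enough (sumR l' f <= sumR l f) by lra.
      apply IH; auto using in_cons.
      intros y Hy. destruct (Hincl y Hy); [subst; contradiction|auto].
Qed.

(** * The function [x ln x] *)

Lemma ln_le_sub1 x : 0 < x -> ln x <= x - 1.
Proof. intros. pose proof (exp_ineq1_le (ln x)). rewrite exp_ln in *; lra. Qed.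

Lemma ln_le_mono x y : 0 < x -> x <= y -> ln x <= ln y.
Proof. intros. destruct (Req_dec x y) as [->|]; [lra|]. left; apply ln_increasing; lra. Qed.

Lemma ln_nonpos x : 0 < x -> x <= 1 -> ln x <= 0.
Proof. intros. rewrite <- ln_1. apply ln_le_mono; lra. Qed.

Lemma plogp_pos x : 0 < x -> plogp x = x * ln x.
Proof. intros. unfold plogp. destruct (Rle_dec x 0); lra. Qed.

Lemma plogp_0 : plogp 0 = 0.
Proof. unfold plogp. destruct (Rle_dec 0 0); lra. Qed.

Lemma plogp_nonpos x : 0 <= x <= 1 -> plogp x <= 0.
Proof.
  intros. destruct (Req_dec x 0) as [->|]; [rewrite plogp_0; lra|].
  rewrite plogp_pos by lra. pose proof (ln_nonpos x ltac:(lra) ltac:(lra)). nra.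
Qed.

Lemma plogp_superadditive a b :
  0 <= a -> 0 <= b -> plogp a + plogp b <= plogp (a + b).
Proof.
  intros. destruct (Req_dec a 0) as [->|]; [rewrite plogp_0, !Rplus_0_l; lra|].
  destruct (Req_dec b 0) as [->|]; [rewrite plogp_0, !Rplus_0_r; lra|].
  rewrite !plogp_pos by lra.
  pose proof (ln_le_mono a (a + b) ltac:(lra) ltac:(lra)).
  pose proof (ln_le_mono b (a + b) ltac:(lra) ltac:(lra)).
  assert (0 <= a * (ln (a + b) - ln a)) by (apply Rmult_le_pos; lra).
  assert (0 <= b * (ln (a + b) - ln b)) by (apply Rmult_le_pos; lra). nra.
Qed.

Lemma light_mass_entropy x eps : 0 <= x <= 1 -> 0 < eps ->
  (if Rlt_dec x eps then x else 0) * - ln eps <= - plogp x.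
Proof.
  intros. destruct (Rlt_dec x eps).
  - destruct (Req_dec x 0) as [->|]; [rewrite plogp_0; lra|].
    rewrite plogp_pos by lra. pose proof (ln_le_mono x eps ltac:(lra) ltac:(lra)). nra.
  - pose proof (plogp_nonpos x H). lra.
Qed.

Lemma atom_entropy_le x d : 0 < d -> (x = 0 \/ d <= x <= 1) -> - plogp x <= x * - ln d.
Proof.
  intros Hd [->|Hx]; [rewrite plogp_0; lra|].
  rewrite plogp_pos by lra. pose proof (ln_le_mono d x ltac:(lra) ltac:(lra)). nra.
Qed.

(* [ln t <= t - 1] at [t = sqrt (a / x)]. *)
Lemma plogp_sub_ge_hellinger x a :
  0 <= x -> 0 < a -> 2 * x - 2 * (sqrt x * sqrt a) <= plogp x - x * ln a.
Proof.
  intros Hx Ha. destruct (Req_dec x 0) as [->|Hx0]; [rewrite plogp_0, sqrt_0; lra|].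
  rewrite plogp_pos by lra. set (u := sqrt x). set (s := sqrt a).
  assert (Hu : 0 < u) by (apply sqrt_lt_R0; lra).
  assert (Hs : 0 < s) by (apply sqrt_lt_R0; lra).
  assert (Ex : x = u * u) by (unfold u; rewrite sqrt_sqrt; lra).
  assert (Ea : a = s * s) by (unfold s; rewrite sqrt_sqrt; lra).
  rewrite Ex, Ea, !ln_mult by lra.
  assert (Hln : ln (s / u) <= s / u - 1) by (apply ln_le_sub1, Rdiv_lt_0_compat; lra).
  unfold Rdiv in Hln. rewrite ln_mult, ln_Rinv in Hln by (try apply Rinv_0_lt_compat; lra).
  assert (u * u * (s * / u) = u * s) by (field; lra).
  assert (u * u * (ln s - ln u) <= u * u * (s * / u - 1)) by (apply Rmult_le_compat_l; nra).
  nra.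
Qed.

(* The gap [e^2 / 2] reflects the curvature [1 / x >= 1] of [x ln x] on [(0, 1]]. *)
Lemma plogp_midpoint_gap a e : 0 < a <= 1 -> - a <= e <= a ->
  2 * plogp a + e * e / 2 <= plogp (a + e) + plogp (a - e).
Proof.
  intros Ha He.
  pose proof (plogp_sub_ge_hellinger (a + e) a ltac:(lra) ltac:(lra)) as K1.
  pose proof (plogp_sub_ge_hellinger (a - e) a ltac:(lra) ltac:(lra)) as K2.
  rewrite (plogp_pos a) by lra.
  set (u := sqrt (a + e)) in *. set (v := sqrt (a - e)) in *. set (s := sqrt a) in *.
  assert (Hu : 0 <= u) by apply sqrt_pos. assert (Hv : 0 <= v) by apply sqrt_pos.
  assert (Hs : 0 < s) by (apply sqrt_lt_R0; lra).
  assert (Eu : u * u = a + e) by (unfold u; rewrite sqrt_sqrt; lra).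
  assert (Ev : v * v = a - e) by (unfold v; rewrite sqrt_sqrt; lra).
  assert (Es : s * s = a) by (unfold s; rewrite sqrt_sqrt; lra).
  assert (Huv : 2 * a * (u * v) <= 2 * a * a - e * e).
  { assert (0 <= u * v) by nra.
    assert ((u * v) * (u * v) = a * a - e * e) by nra.
    assert (0 <= 2 * a * a - e * e) by nra.
    assert ((2 * a * (u * v)) * (2 * a * (u * v)) <= (2 * a * a - e * e) * (2 * a * a - e * e)) by nra.
    assert (0 <= 2 * a * (u * v)) by nra. nra. }
  assert (Hsum : s * (u + v) <= 2 * a - e * e / 4).
  { assert ((s * (u + v)) * (s * (u + v)) = a * (2 * a + 2 * (u * v))) by nra.
    assert ((s * (u + v)) * (s * (u + v)) <= (2 * a - e * e / 4) * (2 * a - e * e / 4)) by nra.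
    assert (0 <= s * (u + v)) by nra. assert (0 <= 2 * a - e * e / 4) by nra. nra. }
  nra.
Qed.

Lemma plogp_midpoint_convex a e : 0 <= a <= 1 -> 0 <= a + e -> 0 <= a - e ->
  2 * plogp a <= plogp (a + e) + plogp (a - e).
Proof.
  intros. destruct (Req_dec a 0) as [->|].
  - replace e with 0 by lra. rewrite Rplus_0_l, Rminus_0_r, plogp_0. lra.
  - pose proof (plogp_midpoint_gap a e ltac:(lra) ltac:(lra)).
    pose proof (Rle_0_sqr e). unfold Rsqr in *. lra.
Qed.

(* A cylinder function [p] is a finite translation invariant measure iff it is
   nonnegative and consistent on both sides. *)
Definition right_consistent (p : word -> R) :=
  forall w, p w = p (w ++ [false]) + p (w ++ [true]).
Definition left_consistent (p : word -> R) :=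
  forall w, p w = p (false :: w) + p (true :: w).

Lemma In_words_length n w : In w (words n) -> length w = n.
Proof.
  revert w; induction n as [|n IH]; intros w H; simpl in H.
  - destruct H as [<-|[]]; auto.
  - apply in_flat_map in H as [v [Hv Hw]]. simpl in Hw.
    destruct Hw as [<-|[<-|[]]]; simpl; f_equal; auto.
Qed.

Lemma In_words n w : length w = n -> In w (words n).
Proof.
  intros <-. induction w as [|b w IH]; simpl; auto.
  apply in_flat_map. exists w. destruct b; simpl; auto.
Qed.

Lemma sumR_words_S n (f : word -> R) :
  sumR (words (S n)) f = sumR (words n) (fun w => f (false :: w) + f (true :: w)).
Proof. simpl words. rewrite sumR_flat_map. apply sumR_ext. intros. simpl. lra. Qed.

Section RightConsistent.
Variable p : word -> R.
Hypothesis Hp : right_consistent p.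

Lemma sumR_extensions N w : sumR (words N) (fun v => p (w ++ v)) = p w.
Proof.
  revert w; induction N as [|N IH]; intros w.
  - simpl. rewrite app_nil_r. lra.
  - rewrite sumR_words_S.
    rewrite (sumR_ext _ _ (fun v => p ((w ++ [false]) ++ v) + p ((w ++ [true]) ++ v)))
      by (intros; rewrite <- !app_assoc; reflexivity).
    rewrite sumR_plus, !IH. symmetry; apply Hp.
Qed.

Lemma sumR_words N : sumR (words N) p = p nil.
Proof. rewrite <- (sumR_extensions N nil). apply sumR_ext. reflexivity. Qed.

Hypothesis Hnn : forall w, 0 <= p w.

Lemma extension_le w v : p (w ++ v) <= p w.
Proof.
  rewrite <- (sumR_extensions (length v) w).
  apply (sumR_term_le _ (fun v => p (w ++ v))); auto using In_words.
Qed.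

Lemma le_at_nil w : p w <= p nil.
Proof. apply (extension_le nil w). Qed.

End RightConsistent.

Lemma app_le p : left_consistent p -> (forall w, 0 <= p w) -> forall u v, p (u ++ v) <= p v.
Proof.
  intros Hp Hn u v. induction u as [|b u IH]; simpl; [lra|].
  rewrite (Hp (u ++ v)) in IH. pose proof (Hn (false :: u ++ v)). pose proof (Hn (true :: u ++ v)).
  destruct b; lra.
Qed.

Lemma right_consistent_lin p1 p2 c :
  right_consistent p1 -> right_consistent p2 -> right_consistent (fun w => p1 w + c * p2 w).
Proof. intros H1 H2 w. rewrite (H1 w), (H2 w). ring. Qed.

Lemma left_consistent_lin p1 p2 c :
  left_consistent p1 -> left_consistent p2 -> left_consistent (fun w => p1 w + c * p2 w).
Proof. intros H1 H2 w. rewrite (H1 w), (H2 w). ring. Qed.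

Lemma right_consistent_sub p1 p2 :
  right_consistent p1 -> right_consistent p2 -> right_consistent (fun w => p1 w - p2 w).
Proof. intros H1 H2 w. rewrite (H1 w), (H2 w). ring. Qed.

Lemma left_consistent_sub p1 p2 :
  left_consistent p1 -> left_consistent p2 -> left_consistent (fun w => p1 w - p2 w).
Proof. intros H1 H2 w. rewrite (H1 w), (H2 w). ring. Qed.

Lemma right_consistent_sum {A} (l : list A) (c : A -> R) (F : A -> word -> R) :
  (forall a, In a l -> right_consistent (F a)) ->
  right_consistent (fun w => sumR l (fun a => c a * F a w)).
Proof.
  intros H w. rewrite <- sumR_plus. apply sumR_ext. intros a Ha. rewrite (H a Ha w). ring.
Qed.

Lemma left_consistent_sum {A} (l : list A) (c : A -> R) (F : A -> word -> R) :
  (forall a, In a l -> left_consistent (F a)) ->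
  left_consistent (fun w => sumR l (fun a => c a * F a w)).
Proof.
  intros H w. rewrite <- sumR_plus. apply sumR_ext. intros a Ha. rewrite (H a Ha w). ring.
Qed.

Lemma ti_prob_le1 mu : is_ti_prob mu -> forall w, 0 <= mu w <= 1.
Proof. intros (Hnil & Hnn & Hr & _) w. split; auto. rewrite <- Hnil. apply le_at_nil; auto. Qed.

Lemma marg_entropy_growing p :
  left_consistent p -> (forall w, 0 <= p w) -> Un_growing (marg_entropy p).
Proof.
  intros Hp Hn j. unfold marg_entropy. rewrite (sumR_words_S (S j)).
  enough (sumR (words (S j)) (fun w => plogp (p (false :: w)) + plogp (p (true :: w))) <=
          sumR (words (S j)) (fun w => plogp (p w))) by lra.
  apply sumR_le. intros w _. rewrite (Hp w). apply plogp_superadditive; auto.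
Qed.

Lemma marg_entropy_nonneg p : (forall w, 0 <= p w <= 1) -> forall j, 0 <= marg_entropy p j.
Proof.
  intros H j. unfold marg_entropy. rewrite <- sumR_opp. apply sumR_nonneg. intros w _.
  pose proof (plogp_nonpos (p w) (H w)). lra.
Qed.

Lemma ti_prob_marg_entropy_le mu L :
  is_ti_prob mu -> Un_cv (marg_entropy mu) L -> forall j, marg_entropy mu j <= L.
Proof.
  intros Hti HL j. destruct Hti as (_ & Hnn & _ & Hl).
  apply growing_ineq; auto. apply marg_entropy_growing; auto.
Qed.

Lemma Un_cv_le_eventually u v l m : Un_cv u l -> Un_cv v m ->
  (exists N, forall n, (N <= n)%nat -> u n <= v n) -> l <= m.
Proof.
  intros Hu Hv [N HN].
  apply (Rle_cv_lim (Un := fun n => u (n + N)%nat) (Vn := fun n => v (n + N)%nat)).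
  - intros n. apply HN. lia.
  - apply CV_shift'; auto.
  - apply CV_shift'; auto.
Qed.

(** * Configurations, periods and BPC measures *)

Definition pref (n : nat) (x : nat -> bool) : word := map x (seq 0 n).
Definition shift (m : nat) (x : nat -> bool) : nat -> bool := fun j => x (m + j)%nat.
Definition periodic (c : nat -> bool) (p : nat) := forall n, c (n + p)%nat = c n.

Definition occ (c : nat -> bool) (p : nat) (w : word) : nat :=
  length (filter (fun i => matches_at c i w) (seq 0 p)).

Lemma pref_length n x : length (pref n x) = n.
Proof. unfold pref. rewrite length_map, length_seq. auto. Qed.

Lemma nth_pref n x j : (j < n)%nat -> nth j (pref n x) false = x j.
Proof.
  intros. unfold pref. rewrite nth_indep with (d' := x 0%nat) by (rewrite length_map, length_seq; auto).
  rewrite map_nth, seq_nth; auto.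
Qed.

Lemma pref_S n x : pref (S n) x = pref n x ++ [x n].
Proof. unfold pref. rewrite seq_S, map_app. reflexivity. Qed.

Lemma pref_ext n x y : (forall j, (j < n)%nat -> x j = y j) -> pref n x = pref n y.
Proof. intros H. apply map_ext_in. intros a Ha. apply in_seq in Ha. apply H; lia. Qed.

Lemma pref_eq n x w :
  length w = n -> (forall j, (j < n)%nat -> x j = nth j w false) -> pref n x = w.
Proof.
  intros Hl H. apply nth_ext with (d := false) (d' := false); rewrite pref_length; auto.
  intros j Hj. rewrite nth_pref; auto.
Qed.

Lemma pref_add n m x : pref (n + m) x = pref n x ++ pref m (shift n x).
Proof.
  apply pref_eq; [rewrite length_app, !pref_length; auto|].
  intros j Hj. destruct (Nat.lt_ge_cases j n).
  - rewrite app_nth1, nth_pref by (rewrite ?pref_length; auto). auto.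
  - rewrite app_nth2, pref_length, nth_pref by (rewrite ?pref_length; lia).
    unfold shift. f_equal; lia.
Qed.

Lemma pref_inj_nth n x y : pref n x = pref n y -> forall j, (j < n)%nat -> x j = y j.
Proof. intros H j Hj. rewrite <- (nth_pref n x j), <- (nth_pref n y j), H; auto. Qed.

Lemma pref_le_shift rho : left_consistent rho -> (forall w, 0 <= rho w) ->
  forall x m n, rho (pref (m + n) x) <= rho (pref n (shift m x)).
Proof. intros Hl Hn x m n. rewrite pref_add. apply app_le; auto. Qed.

Lemma matches_at_spec c i w :
  matches_at c i w = true <-> forall j, (j < length w)%nat -> c (i + j)%nat = nth j w false.
Proof.
  revert i; induction w as [|b w IH]; intros i; simpl.
  - split; auto. intros _ j Hj; lia.
  - rewrite andb_true_iff, IH, eqb_true_iff. split.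
    + intros [H1 H2] [|j] Hj; [rewrite Nat.add_0_r; auto|].
      rewrite <- H2 by lia. f_equal; lia.
    + intros H. split; [rewrite <- (H 0%nat) by lia; f_equal; lia|].
      intros j Hj. rewrite <- (H (S j)) by lia. f_equal; lia.
Qed.

Lemma matches_at_pref c i w : matches_at c i w = true <-> pref (length w) (shift i c) = w.
Proof.
  rewrite matches_at_spec. split; intros H.
  - apply pref_eq; auto.
  - intros j Hj. rewrite <- H, nth_pref; auto.
Qed.

Lemma matches_at_snoc c i w b :
  matches_at c i (w ++ [b]) = matches_at c i w && Bool.eqb (c (i + length w)%nat) b.
Proof.
  revert i; induction w as [|a w IH]; intros i; simpl.
  - rewrite Nat.add_0_r. destruct (Bool.eqb (c i) b); auto.
  - rewrite IH. replace (S i + length w)%nat with (i + S (length w))%nat by lia.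
    rewrite andb_assoc; auto.
Qed.

Lemma matches_at_periodic c p w : periodic c p -> forall i, matches_at c (i + p) w = matches_at c i w.
Proof.
  intros H. induction w as [|b w IH]; intros i; simpl; auto.
  rewrite H, <- (IH (S i)). do 3 f_equal.
Qed.

Lemma length_filter_orb {A} (f g h : A -> bool) l :
  (forall x, f x = g x || h x) -> (forall x, g x && h x = false) ->
  length (filter f l) = (length (filter g l) + length (filter h l))%nat.
Proof.
  intros H1 H2. induction l as [|a l IH]; simpl; auto. rewrite H1. specialize (H2 a).
  destruct (g a), (h a); simpl in *; try discriminate; lia.
Qed.

Lemma occ_snoc c p w : occ c p w = (occ c p (w ++ [false]) + occ c p (w ++ [true]))%nat.
Proof.
  apply length_filter_orb; intros i; rewrite !matches_at_snoc;
    destruct (matches_at c i w), (c (i + length w)%nat); reflexivity.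
Qed.

(* Shifting the window of positions by one is harmless as position [p] matches like [0]. *)
Lemma occ_cons c p w : (0 < p)%nat -> periodic c p ->
  occ c p w = (occ c p (false :: w) + occ c p (true :: w))%nat.
Proof.
  intros Hp H. unfold occ.
  rewrite <- (length_filter_orb (fun i => matches_at c (S i) w))
    by (intros i; simpl; destruct (c i), (matches_at c (S i) w); reflexivity).
  destruct p as [|p']; [lia|].
  set (m := fun i => matches_at c i w).
  replace (length (filter (fun i => matches_at c (S i) w) (seq 0 (S p'))))
    with (length (filter m (seq 1 (S p'))))
    by (rewrite <- seq_shift, filter_map_swap, length_map; reflexivity).
  change (seq 0 (S p')) with (0%nat :: seq 1 p'). rewrite seq_S, filter_app, length_app. simpl.
  replace (m (S p')) with (m 0%nat) by (symmetry; apply (matches_at_periodic c (S p') w H 0)).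
  destruct (m 0%nat); simpl; lia.
Qed.

Lemma periodic_mul c p : periodic c p -> forall m n, c (n + p * m)%nat = c n.
Proof.
  intros H m. induction m as [|m IH]; intros n; [rewrite Nat.mul_0_r, Nat.add_0_r; auto|].
  replace (n + p * S m)%nat with ((n + p * m) + p)%nat by lia. rewrite H; auto.
Qed.

Lemma periodic_mod c p : (0 < p)%nat -> periodic c p -> forall n, c n = c (n mod p).
Proof.
  intros Hp H n. rewrite (Nat.div_mod n p) at 1 by lia.
  rewrite Nat.add_comm. apply periodic_mul; auto.
Qed.

Lemma periodic_ext c d p : (0 < p)%nat -> periodic c p -> periodic d p ->
  (forall j, (j < p)%nat -> c j = d j) -> forall j, c j = d j.
Proof.
  intros Hp Hc Hd H j. rewrite (periodic_mod c p Hp Hc), (periodic_mod d p Hp Hd).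
  apply H, Nat.mod_upper_bound; lia.
Qed.

Lemma periodic_shift c p m : periodic c p -> periodic (shift m c) p.
Proof. intros H n. unfold shift. rewrite Nat.add_assoc. apply H. Qed.

Lemma exists_min_period c r : (0 < r)%nat -> periodic c r -> exists p, min_period c p.
Proof.
  intros Hr Hc.
  destruct (Wf_nat.dec_inh_nat_subset_has_unique_least_element
              (fun p => (0 < p)%nat /\ periodic c p)) as [p [[[Hp1 Hp2] Hmin] _]];
    [intros n; apply classic|exists r; auto|].
  exists p. repeat split; auto. intros r' Hr' Hc'. specialize (Hmin r' (conj (proj1 Hr') Hc')). lia.
Qed.

Lemma min_period_shift_inj c p i j : min_period c p -> (i < p)%nat -> (j < p)%nat ->
  (forall t, c (i + t)%nat = c (j + t)%nat) -> i = j.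
Proof.
  intros (Hp & Hc & Hmin) Hi Hj H.
  assert (Hlt : forall a b, (a < b < p)%nat -> (forall t, c (a + t)%nat = c (b + t)%nat) -> False).
  { intros a b Hab Heq. apply (Hmin (b - a)%nat ltac:(lia)). intros s.
    rewrite <- (periodic_mul c p Hc a (s + (b - a))), <- (periodic_mul c p Hc a s).
    replace (s + (b - a) + p * a)%nat with (b + (s + p * a - a))%nat by nia.
    replace (s + p * a)%nat with (a + (s + p * a - a))%nat at 2 by nia.
    symmetry. apply Heq. }
  destruct (Nat.lt_trichotomy i j) as [|[|]]; auto; exfalso; eauto.
Qed.

Lemma periodic_unshift c p a b n : (0 < p)%nat -> periodic c p ->
  (forall t, c (a + n + t)%nat = c (b + n + t)%nat) -> forall s, c (a + s)%nat = c (b + s)%nat.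
Proof.
  intros Hp Hc H s. rewrite <- (periodic_mul c p Hc n (a + s)), <- (periodic_mul c p Hc n (b + s)).
  replace (a + s + p * n)%nat with (a + n + (s + p * n - n))%nat by nia.
  replace (b + s + p * n)%nat with (b + n + (s + p * n - n))%nat by nia. apply H.
Qed.

Lemma occ_nil c p : occ c p nil = p.
Proof. unfold occ. simpl. rewrite filter_true, length_seq. auto. Qed.

Lemma bpc_prob_occ c p w : bpc_prob c p w = INR (occ c p w) / INR p.
Proof. unfold bpc_prob, Rdiv. fold (occ c p w). ring. Qed.

Lemma bpc_prob_nil c p : (0 < p)%nat -> bpc_prob c p nil = 1.
Proof. intros. rewrite bpc_prob_occ, occ_nil. field. apply not_0_INR; lia. Qed.

Lemma bpc_prob_nonneg c p w : (0 < p)%nat -> 0 <= bpc_prob c p w.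
Proof.
  intros. rewrite bpc_prob_occ. apply Rmult_le_pos; [apply pos_INR|].
  left. apply Rinv_0_lt_compat, lt_0_INR; auto.
Qed.

Lemma bpc_right_consistent c p : right_consistent (bpc_prob c p).
Proof. intros w. rewrite !bpc_prob_occ, (occ_snoc c p w), plus_INR. lra. Qed.

Lemma bpc_left_consistent c p : min_period c p -> left_consistent (bpc_prob c p).
Proof.
  intros (Hp & H & _) w. rewrite !bpc_prob_occ, (occ_cons c p w Hp H), plus_INR. lra.
Qed.

Definition same_orbit (c d : nat -> bool) := exists s s', forall j, c (s + j)%nat = d (s' + j)%nat.

Lemma same_orbit_sym c d : same_orbit c d -> same_orbit d c.
Proof. intros [s [s' H]]. exists s', s. intros; symmetry; auto. Qed.

Lemma filter_nil_In {A} (f : A -> bool) l : (forall x, In x l -> f x = false) -> filter f l = [].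
Proof.
  induction l as [|a l IH]; intros H; simpl; auto. rewrite H by apply in_eq.
  apply IH. intros; apply H, in_cons; auto.
Qed.

Lemma occ_own_pref c p n : min_period c p -> (p <= n)%nat -> occ c p (pref n c) = 1%nat.
Proof.
  intros Hmp Hn. pose proof Hmp as (Hp & Hc & _). unfold occ.
  destruct p as [|p']; [lia|]. change (seq 0 (S p')) with (0%nat :: seq 1 p'). simpl.
  replace (matches_at c 0 (pref n c)) with true
    by (symmetry; apply matches_at_pref; rewrite pref_length; apply pref_ext; auto).
  simpl. rewrite filter_nil_In; auto.
  intros i Hi. apply in_seq in Hi. destruct (matches_at c i (pref n c)) eqn:E; auto. exfalso.
  apply matches_at_pref in E. rewrite pref_length in E.
  enough (i = 0%nat) by lia.
  apply (min_period_shift_inj c (S p') i 0 Hmp); try lia.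
  apply (periodic_ext (shift i c) (shift 0 c) (S p')); auto using periodic_shift.
  intros t Ht. apply (pref_inj_nth n); [rewrite E; apply pref_ext|]; auto; lia.
Qed.

Lemma occ_other_orbit c p d p' n : min_period c p -> min_period d p' -> (p * p' <= n)%nat ->
  ~ same_orbit d c -> occ d p' (pref n c) = 0%nat.
Proof.
  intros (Hp & Hc & _) (Hp' & Hd & _) Hn Hno. unfold occ. rewrite filter_nil_In; auto.
  intros r Hr. destruct (matches_at d r (pref n c)) eqn:E; auto. exfalso. apply Hno.
  apply matches_at_pref in E. rewrite pref_length in E.
  exists r, 0%nat. apply (periodic_ext (shift r d) (shift 0 c) (p * p')); [nia| | |].
  - intros s. unfold shift. rewrite Nat.mul_comm, Nat.add_assoc. apply periodic_mul; auto.
  - intros s. unfold shift. simpl. apply periodic_mul; auto.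
  - intros t Ht. apply (pref_inj_nth n); [rewrite E; apply pref_ext|]; auto; lia.
Qed.

Lemma same_orbit_lower_bound rho c d p' eta :
  left_consistent rho -> (forall w, 0 <= rho w) -> min_period d p' ->
  (forall n, eta <= rho (pref n c)) -> same_orbit c d -> forall n, eta <= rho (pref n d).
Proof.
  intros Hl Hn (Hp' & Hd & _) Hc [s [s' H]] n.
  set (t := (p' * s' - s')%nat).
  replace (pref n d) with (pref n (shift t (shift s c))).
  - eapply Rle_trans; [|apply pref_le_shift; auto].
    eapply Rle_trans; [apply (Hc (s + (t + n))%nat)|]. apply pref_le_shift; auto.
  - apply pref_ext. intros j Hj. unfold shift, t. rewrite H.
    rewrite <- (periodic_mul d p' Hd s' j). f_equal. nia.
Qed.

(** * Extracting a periodic component *)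

Section HeavyWords.
Variables (mu rho : word -> R) (L : R).
Hypothesis Hmu : right_consistent mu.
Hypothesis Hmu_nil : mu nil = 1.
Hypothesis Hmu_bound : forall w, 0 <= mu w <= 1.
Hypothesis Hentropy : forall j, marg_entropy mu j <= L.
Hypothesis Hrho : right_consistent rho.
Hypothesis Hrho_bound : forall w, 0 <= rho w <= mu w.

(* Words of [mu]-mass below [eps = exp (- K)] each cost entropy [K], so their
   total mass is at most [L / K <= rho [] / 4]; the other words carry [rho]-mass
   at most [eta / eps] times their [mu]-mass, which sums to [rho [] / 4]. *)
Lemma heavy_words_exist : 0 < rho nil ->
  exists eta, 0 < eta /\ forall n, exists w, length w = n /\ eta <= rho w.
Proof.
  intros Hpos. set (r := rho nil) in *.
  set (K := 4 * Rabs L / r + 1).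
  assert (HK : K * (r / 4) = Rabs L + r / 4) by (unfold K; field; lra).
  assert (HK0 : 0 < K).
  { assert (0 <= 4 * Rabs L / r); [|unfold K; lra].
    apply Rmult_le_pos; [pose proof (Rabs_pos L); lra|left; apply Rinv_0_lt_compat; auto]. }
  set (eps := exp (- K)).
  assert (Heps : 0 < eps < 1).
  { split; [apply exp_pos|]. rewrite <- exp_0. apply exp_increasing. lra. }
  assert (HlnK : - ln eps = K) by (unfold eps; rewrite ln_exp; lra).
  assert (Heps_r : 0 < eps * r <= r).
  { split; [apply Rmult_lt_0_compat; lra|]. rewrite <- (Rmult_1_l r) at 2.
    apply Rmult_le_compat_r; lra. }
  exists (eps * r / 4). split; [lra|].
  intros [|j]; [exists nil; split; auto; fold r; lra|].
  apply NNPP. intros Hno.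
  assert (Hlight_rho : forall w, In w (words (S j)) -> rho w < eps * r / 4).
  { intros w Hw. apply Rnot_le_lt. intros Hle. apply Hno. exists w. split; auto.
    apply In_words_length; auto. }
  set (light := fun w => if Rlt_dec (mu w) eps then mu w else 0).
  assert (Hlight_nonneg : 0 <= sumR (words (S j)) light).
  { apply sumR_nonneg. intros w _. unfold light. destruct (Rlt_dec (mu w) eps); [apply Hmu_bound|lra]. }
  assert (Hlight_entropy : sumR (words (S j)) light * K <= L).
  { rewrite <- HlnK, Rmult_comm, <- sumR_scal. eapply Rle_trans; [|apply (Hentropy j)].
    unfold marg_entropy. rewrite <- sumR_opp. apply sumR_le. intros w _.
    rewrite Rmult_comm. apply light_mass_entropy; [apply Hmu_bound|lra]. }
  assert (Hlight_mass : r <= sumR (words (S j)) light + r / 4).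
  { assert (sumR (words (S j)) rho <= sumR (words (S j)) (fun w => light w + r / 4 * mu w)).
    { apply sumR_le. intros w Hw. specialize (Hlight_rho w Hw).
      specialize (Hrho_bound w). specialize (Hmu_bound w). unfold light.
      destruct (Rlt_dec (mu w) eps); nra. }
    rewrite sumR_plus, sumR_scal, (sumR_words mu Hmu), Hmu_nil, (sumR_words rho Hrho) in H.
    unfold r in *; lra. }
  pose proof (Rle_abs L).
  assert (sumR (words (S j)) light <= r / 4); [|unfold r in *; lra].
  apply Rnot_lt_le. intros Hc.
  assert (r / 4 * K < sumR (words (S j)) light * K) by (apply Rmult_lt_compat_r; auto). nra.
Qed.

End HeavyWords.

Lemma koenig_branch rho eta : right_consistent rho -> (forall w, 0 <= rho w) ->
  (forall n, exists w, length w = n /\ eta <= rho w) ->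
  exists x : nat -> bool, forall n, eta <= rho (pref n x).
Proof.
  intros Hr Hn Hall.
  set (extendable := fun w => forall m, exists v, length v = m /\ eta <= rho (w ++ v)).
  assert (Hext_nil : extendable nil).
  { intros m. destruct (Hall m) as [v [? ?]]. exists v; auto. }
  assert (Hext_S : forall w, extendable w ->
                   extendable (w ++ [false]) \/ extendable (w ++ [true])).
  { intros w Hw. apply NNPP. intros Hc. apply not_or_and in Hc as [H0 H1].
    apply not_all_ex_not in H0 as [m0 H0]. apply not_all_ex_not in H1 as [m1 H1].
    destruct (Hw (S (m0 + m1))) as [[|b v] [Hlv Hv]]; [discriminate|].
    injection Hlv as Hlv. set (m := if b then m1 else m0).
    assert (Hm : exists v', length v' = m /\ eta <= rho ((w ++ [b]) ++ v')).
    { exists (firstn m v). split; [rewrite length_firstn; unfold m; destruct b; lia|].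
      eapply Rle_trans; [apply Hv|]. rewrite <- (firstn_skipn m v) at 1.
      replace (w ++ b :: firstn m v ++ skipn m v) with (((w ++ [b]) ++ firstn m v) ++ skipn m v)
        by (rewrite <- !app_assoc; reflexivity).
      apply extension_le; auto. }
    destruct b; [apply H1|apply H0]; exact Hm. }
  set (next := fun w =>
         if excluded_middle_informative (extendable (w ++ [false])) then w ++ [false] else w ++ [true]).
  set (branch := fun n => Nat.iter n next nil).
  assert (Hbranch_ext : forall n, extendable (branch n)).
  { induction n as [|n IH]; simpl; auto. unfold next.
    destruct (excluded_middle_informative (extendable (branch n ++ [false]))); auto.
    destruct (Hext_S _ IH); tauto. }
  assert (Hbranch_S : forall n, exists b, branch (S n) = branch n ++ [b]).
  { intros n. simpl. unfold next. destruct (excluded_middle_informative _); eauto. }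
  assert (Hbranch_len : forall n, length (branch n) = n).
  { induction n as [|n IH]; auto. destruct (Hbranch_S n) as [b ->]. rewrite length_app, IH; simpl; lia. }
  exists (fun n => nth n (branch (S n)) false).
  assert (Hpref : forall n, pref n (fun n => nth n (branch (S n)) false) = branch n).
  { induction n as [|n IH]; auto. rewrite pref_S, IH. destruct (Hbranch_S n) as [b Hb].
    rewrite Hb, app_nth2, Hbranch_len, Nat.sub_diag by (rewrite Hbranch_len; lia). reflexivity. }
  intros n. rewrite Hpref. destruct (Hbranch_ext n 0%nat) as [[|b v] [Hv Hrv]]; [|discriminate].
  rewrite app_nil_r in Hrv. auto.
Qed.

Lemma bounded_witnesses {A} (l : list A) (P : A -> nat -> Prop) :
  (forall a, In a l -> exists t, P a t) ->
  exists N, forall a, In a l -> exists t, (t < N)%nat /\ P a t.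
Proof.
  induction l as [|a l IH]; intros H; [exists 0%nat; intros a []|].
  destruct IH as [N HN]; [intros; apply H, in_cons; auto|].
  destruct (H a (in_eq _ _)) as [t Ht]. exists (S (N + t)). intros b [<-|Hb].
  - exists t; split; auto; lia.
  - destruct (HN b Hb) as [t' [? ?]]. exists t'; split; auto; lia.
Qed.

(* At most [rho [] / eta] windows of a given length can carry mass [eta], so
   two of the first [M] shifts of [x] agree on arbitrarily long windows. *)
Lemma heavy_branch_recurrent rho eta x : right_consistent rho -> (forall w, 0 <= rho w) ->
  0 < eta -> (forall m n, eta <= rho (pref n (shift m x))) ->
  exists i j, (i < j)%nat /\ forall t, x (i + t)%nat = x (j + t)%nat.
Proof.
  intros Hr Hn He H. apply NNPP. intros Hc.
  destruct (INR_archimed eta (rho nil) He) as [M HM].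
  assert (Hsep : forall a, In a (list_prod (seq 0 M) (seq 0 M)) ->
                 exists t, fst a = snd a \/ x (fst a + t)%nat <> x (snd a + t)%nat).
  { intros [i j] _. simpl. destruct (Nat.eq_dec i j) as [->|Ne]; [exists 0%nat; auto|].
    apply NNPP. intros Hc2. apply Hc.
    destruct (Nat.lt_ge_cases i j); [exists i, j|exists j, i]; split; try lia;
      intros t; apply NNPP; intros Hc3; apply Hc2; exists t; auto. }
  destruct (bounded_witnesses _ _ Hsep) as [N HN].
  set (W := map (fun i => pref N (shift i x)) (seq 0 M)).
  assert (HW : NoDup W).
  { apply NoDup_map_NoDup_ForallPairs; [|apply seq_NoDup].
    intros i j Hi Hj Heq. destruct (HN (i, j)) as [t [Ht [E|E]]]; [apply in_prod; auto|auto|].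
    exfalso. apply E. apply (pref_inj_nth N _ _ Heq t Ht). }
  assert (Hincl : incl W (words N)).
  { intros w Hw. apply in_map_iff in Hw as [i [<- _]]. apply In_words, pref_length. }
  pose proof (sumR_incl_le (list_eq_dec bool_dec) (words N) W rho HW Hincl ltac:(auto)) as Hsum.
  unfold W in Hsum. rewrite (sumR_words rho Hr), sumR_map in Hsum.
  assert (sumR (seq 0 M) (fun _ => eta) <= sumR (seq 0 M) (fun i => rho (pref N (shift i x))))
    by (apply sumR_le; auto).
  rewrite sumR_const, length_seq in H0. lra.
Qed.

Lemma min_period_window_inj c p n i j : min_period c p -> (i < p)%nat -> (j < p)%nat ->
  pref p (shift (i + n) c) = pref p (shift (j + n) c) -> i = j.
Proof.
  intros Hmp Hi Hj Heq. pose proof Hmp as (Hp & Hc & _).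
  apply (min_period_shift_inj c p); auto.
  apply (periodic_unshift c p i j n Hp Hc).
  apply (periodic_ext (shift (i + n) c) (shift (j + n) c) p Hp); auto using periodic_shift.
  apply (pref_inj_nth p); auto.
Qed.

(* Each occurrence of [w] at a position [i < p] of [c] extends to the distinct
   word [w ++ pref p (shift (i + |w|) c)], which is a prefix of a shift of [c]. *)
Lemma occ_lower_bound rho c p A : right_consistent rho -> left_consistent rho ->
  (forall w, 0 <= rho w) -> min_period c p ->
  (forall n, A <= rho (pref n c)) -> forall w, A * INR (occ c p w) <= rho w.
Proof.
  intros Hr Hl Hn Hmp HA w.
  set (n := length w). set (F := filter (fun i => matches_at c i w) (seq 0 p)).
  set (ext := fun i => w ++ pref p (shift (i + n) c)).
  assert (HF : forall i, In i F -> pref n (shift i c) = w /\ (i < p)%nat).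
  { intros i Hi. apply filter_In in Hi as [Hi Hm]. apply in_seq in Hi.
    split; [apply matches_at_pref; auto|lia]. }
  assert (Hext : forall i, In i F -> ext i = pref (n + p) (shift i c)).
  { intros i Hi. unfold ext. rewrite pref_add, (proj1 (HF i Hi)). f_equal.
    apply pref_ext. intros t _. unfold shift. f_equal. lia. }
  assert (HND : NoDup (map ext F)).
  { apply NoDup_map_NoDup_ForallPairs; [|apply NoDup_filter, seq_NoDup].
    intros i j Hi Hj Heq. apply app_inv_head in Heq.
    apply (min_period_window_inj c p n); try apply HF; auto. }
  assert (Hincl : incl (map ext F) (map (fun v => w ++ v) (words p))).
  { intros u Hu. apply in_map_iff in Hu as [i [<- _]].
    unfold ext. apply in_map, In_words, pref_length. }
  assert (Hsum : sumR F (fun i => rho (ext i)) <= rho w).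
  { rewrite <- (sumR_extensions rho Hr p w).
    pose proof (sumR_incl_le (list_eq_dec bool_dec) _ _ rho HND Hincl ltac:(auto)) as Hs.
    rewrite !sumR_map in Hs. exact Hs. }
  eapply Rle_trans; [|exact Hsum].
  unfold occ. fold F. rewrite Rmult_comm, <- sumR_const. apply sumR_le.
  intros i Hi. rewrite Hext by auto. eapply Rle_trans; [apply (HA (i + (n + p))%nat)|].
  apply pref_le_shift; auto.
Qed.

Lemma periodic_component mu rho L :
  right_consistent mu -> mu nil = 1 -> (forall w, 0 <= mu w <= 1) ->
  (forall j, marg_entropy mu j <= L) ->
  right_consistent rho -> left_consistent rho -> (forall w, 0 <= rho w <= mu w) -> 0 < rho nil ->
  exists c p A, min_period c p /\ 0 < A /\ (forall n, A <= rho (pref n c)) /\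
    (forall w, A * INR (occ c p w) <= rho w) /\
    (forall e, 0 < e -> exists m, rho (pref m c) < A + e).
Proof.
  intros Hmu Hnil Hb HL Hr Hl Hrb Hpos.
  assert (Hn : forall w, 0 <= rho w) by (intros w; apply Hrb).
  destruct (heavy_words_exist mu rho L Hmu Hnil Hb HL Hr Hrb Hpos) as [eta [He Heta]].
  destruct (koenig_branch rho eta Hr Hn Heta) as [x Hx].
  assert (Hsx : forall m n, eta <= rho (pref n (shift m x))).
  { intros m n. eapply Rle_trans; [apply (Hx (m + n)%nat)|]. apply pref_le_shift; auto. }
  destruct (heavy_branch_recurrent rho eta x Hr Hn He Hsx) as [i [j [Hij Hper]]].
  set (c := shift i x).
  assert (Hcp : periodic c (j - i)).
  { intros t. unfold c, shift. replace (i + (t + (j - i)))%nat with (j + t)%nat by lia.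
    symmetry; apply Hper. }
  destruct (exists_min_period c (j - i) ltac:(lia) Hcp) as [p Hmp].
  set (u := fun n => rho (pref n c)).
  assert (Hdec : Un_decreasing u) by (intros n; unfold u; rewrite pref_S; apply extension_le; auto).
  assert (Hlb : has_lb u).
  { exists 0. intros y [n ->]. unfold opp_seq, u. specialize (Hn (pref n c)). lra. }
  destruct (decreasing_cv u Hdec Hlb) as [A HA].
  assert (HAle : forall n, A <= u n) by (intros; apply (decreasing_ineq u A Hdec HA)).
  assert (Hclose : forall e, 0 < e -> exists m, u m < A + e).
  { intros e He'. destruct (HA e He') as [N HN]. exists N. specialize (HN N (le_n N)).
    unfold R_dist in HN. apply Rabs_def2 in HN. lra. }
  assert (HApos : eta <= A).
  { apply Rnot_lt_le. intros Hlt. destruct (Hclose (eta - A)) as [m Hm]; [lra|].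
    specialize (Hsx i m). unfold u in Hm. fold c in Hsx. lra. }
  exists c, p, A. split; [auto|]. split; [lra|]. split; [exact HAle|].
  split; [apply occ_lower_bound; auto|exact Hclose].
Qed.

(** * Finite combinations of BPC measures *)

Definition bpc_comb (n : nat) (a : nat -> R) (c : nat -> nat -> bool) (per : nat -> nat)
  (w : word) : R :=
  sumR (seq 0 n) (fun i => a i * bpc_prob (c i) (per i) w).

Definition bpc_family (n : nat) (a : nat -> R) (c : nat -> nat -> bool) (per : nat -> nat) :=
  forall i, (i < n)%nat -> 0 < a i /\ min_period (c i) (per i).

Definition fsnoc {A} (f : nat -> A) (n : nat) (v : A) : nat -> A :=
  fun i => if Nat.eqb i n then v else f i.

Lemma fsnoc_lt {A} (f : nat -> A) n v i : (i < n)%nat -> fsnoc f n v i = f i.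
Proof. intros. unfold fsnoc. destruct (Nat.eqb_spec i n); [lia|auto]. Qed.

Lemma fsnoc_eq {A} (f : nat -> A) n v : fsnoc f n v n = v.
Proof. unfold fsnoc. rewrite Nat.eqb_refl. auto. Qed.

Section BpcComb.
Variables (n : nat) (a : nat -> R) (c : nat -> nat -> bool) (per : nat -> nat).

Lemma bpc_comb_right_consistent : right_consistent (bpc_comb n a c per).
Proof. apply right_consistent_sum. intros i _. apply bpc_right_consistent. Qed.

Lemma bpc_comb_left_consistent :
  (forall i, (i < n)%nat -> min_period (c i) (per i)) -> left_consistent (bpc_comb n a c per).
Proof.
  intros H. apply left_consistent_sum. intros i Hi. apply in_seq in Hi.
  apply bpc_left_consistent, H. lia.
Qed.

Lemma bpc_comb_nonneg w :
  (forall i, (i < n)%nat -> 0 <= a i /\ (0 < per i)%nat) -> 0 <= bpc_comb n a c per w.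
Proof.
  intros H. apply sumR_nonneg. intros i Hi. apply in_seq in Hi. destruct (H i ltac:(lia)).
  apply Rmult_le_pos; auto. apply bpc_prob_nonneg; auto.
Qed.

Lemma bpc_comb_nil :
  (forall i, (i < n)%nat -> (0 < per i)%nat) -> bpc_comb n a c per nil = sumR (seq 0 n) a.
Proof.
  intros H. apply sumR_ext. intros i Hi. apply in_seq in Hi.
  rewrite bpc_prob_nil by (apply H; lia). ring.
Qed.

Lemma bpc_comb_lin d s w :
  bpc_comb n (fun i => a i + s * d i) c per w = bpc_comb n a c per w + s * bpc_comb n d c per w.
Proof. unfold bpc_comb. rewrite <- sumR_scal, <- sumR_plus. apply sumR_ext. intros; ring. Qed.

Lemma bpc_comb_snoc A d p w : (0 < p)%nat ->
  bpc_comb (S n) (fsnoc a n (INR p * A)) (fsnoc c n d) (fsnoc per n p) w =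
  bpc_comb n a c per w + A * INR (occ d p w).
Proof.
  intros Hp. unfold bpc_comb. rewrite seq_S, sumR_app. simpl. rewrite !fsnoc_eq, bpc_prob_occ.
  f_equal.
  - apply sumR_ext. intros i Hi. apply in_seq in Hi. rewrite !fsnoc_lt by lia. reflexivity.
  - field. apply not_0_INR. lia.
Qed.

Lemma bpc_family_snoc A d p : bpc_family n a c per -> 0 < A -> min_period d p ->
  bpc_family (S n) (fsnoc a n (INR p * A)) (fsnoc c n d) (fsnoc per n p).
Proof.
  intros H HA Hmp i Hi. destruct (Nat.eq_dec i n) as [->|Ne].
  - rewrite !fsnoc_eq. split; auto. destruct Hmp as [Hp _].
    apply Rmult_lt_0_compat; auto. apply lt_0_INR; auto.
  - rewrite !fsnoc_lt by lia. apply H; lia.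
Qed.

Hypothesis Hfam : bpc_family n a c per.

Lemma bpc_family_per_pos i : (i < n)%nat -> (0 < per i)%nat.
Proof. intros Hi. apply (Hfam i Hi). Qed.

Lemma bpc_family_comb_nonneg w : 0 <= bpc_comb n a c per w.
Proof.
  apply bpc_comb_nonneg. intros i Hi. split; [left; apply Hfam; auto|apply bpc_family_per_pos; auto].
Qed.

Variable mu : word -> R.
Hypothesis Hmu_r : right_consistent mu.
Hypothesis Hmu_l : left_consistent mu.

Lemma residual_right_consistent : right_consistent (fun w => mu w - bpc_comb n a c per w).
Proof. apply right_consistent_sub; auto using bpc_comb_right_consistent. Qed.

Lemma residual_left_consistent : left_consistent (fun w => mu w - bpc_comb n a c per w).
Proof.
  apply left_consistent_sub; auto. apply bpc_comb_left_consistent. intros i Hi. apply Hfam; auto.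
Qed.

End BpcComb.

(* A nonnegative right consistent function vanishing at [[]] vanishes everywhere. *)
Lemma bpc_comb_exhausts mu n a c per : is_ti_prob mu -> bpc_family n a c per ->
  (forall w, 0 <= mu w - bpc_comb n a c per w) -> mu nil - bpc_comb n a c per nil = 0 ->
  is_finite_convex_comb_BPC mu.
Proof.
  intros Hti Hfam Hres Hres_nil. pose proof Hti as (Hnil & _ & Hr & _).
  assert (Hmu : forall w, mu w = bpc_comb n a c per w).
  { intros w. pose proof (le_at_nil _ (residual_right_consistent n a c per mu Hr) Hres w).
    specialize (Hres w). simpl in *. lra. }
  exists (map (fun i => (a i, (c i, per i))) (seq 0 n)). split; [|split].
  - intros e He. apply in_map_iff in He as [i [<- Hi]]. apply in_seq in Hi. simpl.
    destruct (Hfam i ltac:(lia)). split; auto; lra.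
  - rewrite sumR_map. simpl. rewrite <- Hnil, Hmu, bpc_comb_nil; auto.
    intros i Hi. apply (bpc_family_per_pos n a c per Hfam i Hi).
  - intros w. rewrite sumR_map. apply Hmu.
Qed.

(* Eliminate the first coordinate [w0] using a vector [v i0] with
   [v i0 w0 <> 0] and recurse. *)
Lemma linear_dependence {X} (I : list X) : forall (Sx : list nat) (v : nat -> X -> R),
  NoDup Sx -> (length I < length Sx)%nat ->
  exists d : nat -> R, (exists i, In i Sx /\ d i <> 0) /\
    forall w, In w I -> sumR Sx (fun i => d i * v i w) = 0.
Proof.
  induction I as [|w0 I' IH]; intros Sx v HS Hl.
  - destruct Sx as [|i0 S']; simpl in Hl; [lia|].
    exists (fun i => if Nat.eq_dec i i0 then 1 else 0). split; [|intros w []].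
    exists i0. split; [apply in_eq|]. destruct (Nat.eq_dec i0 i0); [lra|congruence].
  - simpl in Hl. destruct (classic (exists i0, In i0 Sx /\ v i0 w0 <> 0)) as [[i0 [Hi0 Hv0]]|Hall].
    + set (r := fun i => v i w0 / v i0 w0).
      set (v' := fun i w => v i w - r i * v i0 w).
      set (S' := remove Nat.eq_dec i0 Sx).
      assert (HS' : NoDup S') by (apply NoDup_remove_dec; auto).
      assert (HlS : S (length S') = length Sx) by (apply length_remove_NoDup; auto).
      destruct (IH S' v' HS' ltac:(lia)) as [d [[j [Hj Hdj]] Hd]].
      set (T := sumR S' (fun i => d i * r i)).
      exists (fun i => if Nat.eq_dec i i0 then - T else d i). split.
      * exists j. apply in_remove in Hj as [Hj Hji0].
        split; auto. destruct (Nat.eq_dec j i0); [congruence|auto].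
      * assert (Key : forall w, sumR Sx (fun i => (if Nat.eq_dec i i0 then - T else d i) * v i w)
                                = sumR S' (fun i => d i * v' i w)).
        { intros w. rewrite (sumR_remove Nat.eq_dec Sx _ i0 HS Hi0). fold S'.
          destruct (Nat.eq_dec i0 i0) as [_|C]; [|congruence].
          rewrite (sumR_ext S' _ (fun i => d i * v i w)).
          2: { intros i Hi. apply in_remove in Hi as [_ Hi].
               destruct (Nat.eq_dec i i0); [congruence|auto]. }
          unfold v'. rewrite (sumR_ext S' (fun i => d i * (v i w - r i * v i0 w))
                                (fun i => d i * v i w - v i0 w * (d i * r i))) by (intros; ring).
          rewrite sumR_minus, sumR_scal. fold T. ring. }
        intros w Hw. rewrite Key. destruct Hw as [<-|Hw]; [|apply Hd; auto].
        apply sumR_zero. intros i _. unfold v', r. field. auto.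
    + destruct (IH Sx v HS ltac:(lia)) as [d [Hnt Hd]]. exists d. split; auto.
      intros w [<-|Hw]; [|apply Hd; auto].
      apply sumR_zero. intros i Hi. replace (v i w0) with 0; [ring|].
      apply NNPP. intros Hne. apply Hall. eauto.
Qed.

Definition distinct_orbits (n : nat) (c : nat -> nat -> bool) :=
  forall i j, (i < n)%nat -> (j < n)%nat -> i <> j -> ~ same_orbit (c i) (c j).

Lemma uniform_scale (l : list nat) (a d : nat -> R) : (forall i, In i l -> 0 < a i) ->
  exists del, 0 < del /\ forall i, In i l -> del * Rabs (d i) <= a i.
Proof.
  induction l as [|i0 l IH]; intros H; [exists 1; split; [lra|intros i []]|].
  destruct IH as [del [Hd Hl]]; [intros; apply H, in_cons; auto|].
  assert (Ha : 0 < a i0) by apply H, in_eq.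
  pose proof (Rabs_pos (d i0)).
  set (e := a i0 / (Rabs (d i0) + 1)).
  assert (He : 0 < e) by (apply Rdiv_lt_0_compat; lra).
  assert (He' : e * Rabs (d i0) <= a i0).
  { assert (e * (Rabs (d i0) + 1) = a i0) by (unfold e; field; lra). nra. }
  exists (Rmin del e). split; [apply Rmin_glb_lt; auto|].
  intros i [<-|Hi].
  - eapply Rle_trans; [|exact He']. apply Rmult_le_compat_r; auto. apply Rmin_r.
  - eapply Rle_trans; [|exact (Hl i Hi)].
    apply Rmult_le_compat_r; [apply Rabs_pos|apply Rmin_l].
Qed.

(* Along long prefixes of [c i0] only the component [i0] contributes, exactly once. *)
Lemma bpc_comb_own_prefix n d c per i0 :
  (forall i, (i < n)%nat -> min_period (c i) (per i)) -> distinct_orbits n c -> (i0 < n)%nat ->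
  exists N, forall j, (N <= j)%nat -> bpc_comb n d c per (pref (S j) (c i0)) = d i0 / INR (per i0).
Proof.
  intros Hmp Hdist Hi0.
  destruct (bounded_witnesses (seq 0 n) (fun i N => (per i0 * per i <= N)%nat)) as [N HN];
    [intros i _; eauto|].
  exists (N + per i0)%nat. intros j Hj.
  assert (Hin : In i0 (seq 0 n)) by (apply in_seq; lia).
  unfold bpc_comb. rewrite (sumR_remove Nat.eq_dec (seq 0 n) _ i0 (seq_NoDup n 0) Hin).
  rewrite sumR_zero.
  - rewrite bpc_prob_occ, occ_own_pref by (auto; lia). simpl INR. lra.
  - intros i Hi. apply in_remove in Hi as [Hi Hne]. pose proof Hi as Hi'. apply in_seq in Hi'.
    destruct (HN i Hi) as [t [Ht Ht']].
    rewrite bpc_prob_occ, (occ_other_orbit (c i0) (per i0) (c i) (per i));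
      [simpl INR; lra|apply Hmp; lia|apply Hmp; lia|lia|apply Hdist; lia].
Qed.

(** * Perturbing a minimiser *)

Lemma ti_prob_perturb mu D s : is_ti_prob mu ->
  right_consistent D -> left_consistent D -> D nil = 0 -> (forall w, 0 <= mu w + s * D w) ->
  is_ti_prob (fun w => mu w + s * D w).
Proof.
  intros (Hnil & _ & Hr & Hl) HDr HDl HD0 Hnn. repeat split; auto.
  - rewrite HD0, Hnil. ring.
  - apply right_consistent_lin; auto.
  - apply left_consistent_lin; auto.
Qed.

Section Perturbation.
Variables (mu D : word -> R).
Hypothesis Hmu : forall w, 0 <= mu w <= 1.
Hypothesis Hplus : forall w, 0 <= mu w + 1 * D w.
Hypothesis Hminus : forall w, 0 <= mu w + -1 * D w.

Lemma marg_entropy_midpoint j :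
  marg_entropy (fun w => mu w + 1 * D w) j + marg_entropy (fun w => mu w + -1 * D w) j
  <= 2 * marg_entropy mu j.
Proof.
  unfold marg_entropy.
  enough (sumR (words (S j)) (fun w => 2 * plogp (mu w)) <=
          sumR (words (S j)) (fun w => plogp (mu w + 1 * D w) + plogp (mu w + -1 * D w)))
    by (rewrite sumR_scal, sumR_plus in *; lra).
  apply sumR_le. intros w _. specialize (Hplus w). specialize (Hminus w).
  replace (mu w + -1 * D w) with (mu w - D w) in * by ring.
  replace (mu w + 1 * D w) with (mu w + D w) in * by ring.
  apply plogp_midpoint_convex; auto.
Qed.

Lemma marg_entropy_midpoint_gap j w : In w (words (S j)) ->
  marg_entropy (fun w => mu w + 1 * D w) j + marg_entropy (fun w => mu w + -1 * D w) j
  <= 2 * marg_entropy mu j - D w * D w / 2.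
Proof.
  intros Hw. unfold marg_entropy.
  enough (sumR (words (S j)) (fun w => 2 * plogp (mu w)) + D w * D w / 2 <=
          sumR (words (S j)) (fun w => plogp (mu w + 1 * D w) + plogp (mu w + -1 * D w)))
    by (rewrite sumR_scal, sumR_plus in *; lra).
  apply sumR_le_gap with (x := w); auto.
  - intros v _. specialize (Hplus v). specialize (Hminus v).
    replace (mu v + -1 * D v) with (mu v - D v) in * by ring.
    replace (mu v + 1 * D v) with (mu v + D v) in * by ring.
    apply plogp_midpoint_convex; auto.
  - specialize (Hplus w). specialize (Hminus w).
    replace (mu w + -1 * D w) with (mu w - D w) in * by ring.
    replace (mu w + 1 * D w) with (mu w + D w) in * by ring.
    destruct (Req_dec (D w) 0) as [->|HD].
    + rewrite Rplus_0_r, Rminus_0_r. lra.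
    + apply plogp_midpoint_gap; [|lra]. split; [|apply Hmu].
      destruct (Rle_dec 0 (D w)); lra.
Qed.

End Perturbation.

Section Minimiser.
Variables (k : nat) (q mu : word -> R) (L : R).
Hypothesis Hti : is_ti_prob mu.
Hypothesis Hmarg : has_marginal k mu q.
Hypothesis HL : Un_cv (marg_entropy mu) L.
Hypothesis Hmin : forall nu t, is_ti_prob nu -> has_marginal k nu q -> has_total_entropy nu t ->
  ext_le (Some L) t.

(* [mu + D] and [mu - D] have the marginal of [mu] and total entropies [>= L],
   while strict convexity makes their sum [<= 2 L - e^2 / 2]. *)
Lemma minimiser_rigid D e :
  right_consistent D -> left_consistent D -> (forall w, In w (words (S k)) -> D w = 0) ->
  (forall s, s = 1 \/ s = -1 -> forall w, 0 <= mu w + s * D w) -> e <> 0 ->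
  (exists N, forall j, (N <= j)%nat -> exists w, In w (words (S j)) /\ D w = e) -> False.
Proof.
  intros HDr HDl HDk Hnn He [N HN].
  pose proof (ti_prob_le1 mu Hti) as Hmu.
  assert (HD0 : D nil = 0) by (rewrite <- (sumR_words D HDr (S k)); apply sumR_zero; auto).
  set (nu := fun s w => mu w + s * D w).
  assert (Hnu_ti : forall s, s = 1 \/ s = -1 -> is_ti_prob (nu s))
    by (intros s Hs; apply ti_prob_perturb; auto).
  assert (Hnu_marg : forall s, has_marginal k (nu s) q).
  { intros s w Hw. unfold nu. rewrite HDk, <- Hmarg by auto. ring. }
  pose proof (marg_entropy_midpoint mu D Hmu (Hnn 1 (or_introl eq_refl)) (Hnn (-1) (or_intror eq_refl)))
    as Hmid.
  assert (Hcv : forall s, s = 1 \/ s = -1 -> exists t, Un_cv (marg_entropy (nu s)) t /\ L <= t).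
  { intros s Hs. pose proof (Hnu_ti s Hs) as (_ & Hnu_nn & _ & Hnu_l).
    assert (Hub : has_ub (marg_entropy (nu s))).
    { exists (2 * L). intros y [j ->]. specialize (Hmid j).
      pose proof (ti_prob_marg_entropy_le mu L Hti HL j).
      pose proof (marg_entropy_nonneg _ (ti_prob_le1 _ (Hnu_ti 1 (or_introl eq_refl))) j).
      pose proof (marg_entropy_nonneg _ (ti_prob_le1 _ (Hnu_ti (-1) (or_intror eq_refl))) j).
      unfold nu in *. destruct Hs as [-> | ->]; lra. }
    destruct (growing_cv _ (marg_entropy_growing _ Hnu_l Hnu_nn) Hub) as [t Ht].
    exists t. split; auto. exact (Hmin (nu s) (Some t) (Hnu_ti s Hs) (Hnu_marg s) Ht). }
  destruct (Hcv 1 (or_introl eq_refl)) as [tp [Htp Htp']].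
  destruct (Hcv (-1) (or_intror eq_refl)) as [tm [Htm Htm']].
  assert (Hlim : tp + tm <= 2 * L - e * e / 2).
  { apply (Un_cv_le_eventually (fun j => marg_entropy (nu 1) j + marg_entropy (nu (-1)) j)
                               (fun j => 2 * marg_entropy mu j - e * e / 2)).
    - apply CV_plus; auto.
    - apply CV_minus; [apply (CV_mult (fun _ => 2)); auto|]; intros eps Heps;
        exists 0%nat; intros; unfold R_dist; rewrite Rminus_diag, Rabs_R0; auto.
    - exists N. intros j Hj. destruct (HN j Hj) as [w [Hw <-]].
      apply marg_entropy_midpoint_gap; auto. }
  assert (0 < e * e) by (apply Rsqr_pos_lt; auto). lra.
Qed.

Lemma minimiser_orbit_count n a c per :
  bpc_family n a c per -> distinct_orbits n c ->
  (forall w, 0 <= mu w - bpc_comb n a c per w) -> (n <= length (words (S k)))%nat.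
Proof.
  intros Hfam Hdist Hres. apply Nat.nlt_ge. intros Hn.
  pose proof (fun i Hi => proj2 (Hfam i Hi)) as Hmp.
  destruct (linear_dependence (words (S k)) (seq 0 n) (fun i w => bpc_prob (c i) (per i) w)
              (seq_NoDup n 0) ltac:(rewrite length_seq; auto)) as [d [[i0 [Hi0 Hd0]] Hd]].
  apply in_seq in Hi0. assert (Hi0n : (i0 < n)%nat) by lia. clear Hi0.
  destruct (uniform_scale (seq 0 n) a d) as [del [Hdel Hdl]].
  { intros i Hi. apply in_seq in Hi. apply Hfam; lia. }
  pose proof Hti as (_ & _ & Hmu_r & Hmu_l).
  set (D := fun w => del * bpc_comb n d c per w).
  assert (Hper : forall i, (i < n)%nat -> (0 < per i)%nat) by exact (bpc_family_per_pos n a c per Hfam).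
  apply (minimiser_rigid D (del * (d i0 / INR (per i0)))).
  - intros w. unfold D. rewrite (bpc_comb_right_consistent n d c per w). ring.
  - intros w. unfold D. rewrite (bpc_comb_left_consistent n d c per Hmp w). ring.
  - intros w Hw. unfold D, bpc_comb. rewrite (Hd w Hw). ring.
  - intros s Hs w.
    replace (mu w + s * D w)
      with ((mu w - bpc_comb n a c per w) + bpc_comb n (fun i => a i + (s * del) * d i) c per w)
      by (unfold D; rewrite bpc_comb_lin; ring).
    apply Rplus_le_le_0_compat; auto. apply bpc_comb_nonneg.
    intros i Hi. split; [|auto].
    assert (Hi' : In i (seq 0 n)) by (apply in_seq; lia).
    specialize (Hdl i Hi'). pose proof (Hfam i Hi) as [Hai _].
    assert (- Rabs (d i) <= d i <= Rabs (d i))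
      by (unfold Rabs; destruct (Rcase_abs (d i)); lra).
    destruct Hs as [-> | ->]; nra.
  - apply Rmult_integral_contrapositive. split; [lra|].
    apply Rmult_integral_contrapositive. split; auto.
    apply Rinv_neq_0_compat, not_0_INR. specialize (Hper i0 Hi0n). lia.
  - destruct (bpc_comb_own_prefix n d c per i0 Hmp Hdist Hi0n) as [N HN].
    exists N. intros j Hj. exists (pref (S j) (c i0)).
    split; [apply In_words, pref_length|]. unfold D. rewrite HN; auto.
Qed.

Definition partial_decomposition n a c per :=
  bpc_family n a c per /\ distinct_orbits n c /\
  (forall w, 0 <= mu w - bpc_comb n a c per w) /\
  (forall i, (i < n)%nat -> forall e, 0 < e ->
     exists m, mu (pref m (c i)) - bpc_comb n a c per (pref m (c i)) < e).

Lemma partial_decomposition_extend n a c per :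
  partial_decomposition n a c per -> 0 < mu nil - bpc_comb n a c per nil ->
  exists A d p, partial_decomposition (S n) (fsnoc a n (INR p * A)) (fsnoc c n d) (fsnoc per n p).
Proof.
  intros (Hfam & Hdist & Hres & Hres_lim) Hpos.
  pose proof Hti as (Hnil & _ & Hmu_r & Hmu_l).
  set (rho := fun w => mu w - bpc_comb n a c per w).
  assert (Hrho_r : right_consistent rho) by (apply residual_right_consistent; auto).
  assert (Hrho_l : left_consistent rho) by (apply residual_left_consistent; auto).
  assert (Hrho_b : forall w, 0 <= rho w <= mu w).
  { intros w. pose proof (bpc_family_comb_nonneg n a c per Hfam w). unfold rho. split; auto; lra. }
  destruct (periodic_component mu rho L Hmu_r Hnil (ti_prob_le1 mu Hti)
              (ti_prob_marg_entropy_le mu L Hti HL) Hrho_r Hrho_l Hrho_b Hpos)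
    as (d & p & A & Hmp & HA & HA_pref & HA_occ & HA_lim).
  pose proof Hmp as (Hp & _).
  exists A, d, p.
  assert (Hcomb : forall w, bpc_comb (S n) (fsnoc a n (INR p * A)) (fsnoc c n d) (fsnoc per n p) w
                            = bpc_comb n a c per w + A * INR (occ d p w))
    by (intros; apply bpc_comb_snoc; auto).
  assert (Hnew : forall i, (i < n)%nat -> ~ same_orbit d (c i)).
  { intros i Hi Ho.
    pose proof (same_orbit_lower_bound rho d (c i) (per i) A Hrho_l (fun w => proj1 (Hrho_b w))
                  (proj2 (Hfam i Hi)) HA_pref Ho) as Hlow.
    destruct (Hres_lim i Hi A HA) as [m Hm]. specialize (Hlow m). unfold rho in Hlow. lra. }
  split; [apply bpc_family_snoc; auto|split; [|split]].
  - intros i j Hi Hj Hij.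
    destruct (Nat.eq_dec i n) as [->|Ni]; destruct (Nat.eq_dec j n) as [->|Nj]; try congruence.
    + rewrite fsnoc_eq, fsnoc_lt by lia. apply Hnew; lia.
    + rewrite fsnoc_eq, fsnoc_lt by lia. intros Ho. apply (Hnew i); [lia|]. apply same_orbit_sym; auto.
    + rewrite !fsnoc_lt by lia. apply Hdist; lia.
  - intros w. rewrite Hcomb. specialize (HA_occ w). unfold rho in HA_occ. lra.
  - intros i Hi e He. destruct (Nat.eq_dec i n) as [->|Ni].
    + rewrite fsnoc_eq. destruct (HA_lim e He) as [m Hm].
      exists (m + p)%nat. rewrite Hcomb, occ_own_pref by (auto; lia). simpl INR.
      assert (rho (pref (m + p) d) <= rho (pref m d))
        by (rewrite pref_add; apply extension_le; auto; intros; apply Hrho_b).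
      unfold rho in *. lra.
    + rewrite fsnoc_lt by lia. destruct (Hres_lim i ltac:(lia) e He) as [m Hm].
      exists m. rewrite Hcomb.
      assert (0 <= A * INR (occ d p (pref m (c i)))) by (apply Rmult_le_pos; [lra|apply pos_INR]).
      lra.
Qed.

Lemma partial_decomposition_complete : forall m n a c per,
  (length (words (S k)) < n + m)%nat -> partial_decomposition n a c per ->
  is_finite_convex_comb_BPC mu.
Proof.
  induction m as [|m IH]; intros n a c per Hnm Hpd.
  - exfalso. destruct Hpd as (Hfam & Hdist & Hres & _).
    pose proof (minimiser_orbit_count n a c per Hfam Hdist Hres). lia.
  - destruct (Req_dec (mu nil - bpc_comb n a c per nil) 0) as [H0|H0].
    + destruct Hpd as (Hfam & _ & Hres & _). apply (bpc_comb_exhausts mu n a c per); auto.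
    + destruct (partial_decomposition_extend n a c per Hpd) as (A & d & p & Hpd').
      { destruct Hpd as (_ & _ & Hres & _). specialize (Hres nil). lra. }
      apply (IH (S n) _ _ _ ltac:(lia) Hpd').
Qed.

End Minimiser.

(** * Minimal total entropy is finite *)

Lemma iter_repeats {A} (f : A -> A) x (l : list A) :
  (forall n, In (Nat.iter n f x) l) -> exists i j, (i < j)%nat /\ Nat.iter i f x = Nat.iter j f x.
Proof.
  intros Hl. apply NNPP. intros Hc.
  assert (HN : NoDup (map (fun n => Nat.iter n f x) (seq 0 (S (length l))))).
  { apply NoDup_map_NoDup_ForallPairs; [|apply seq_NoDup]. intros a b _ _ Hab.
    destruct (Nat.lt_trichotomy a b) as [H|[H|H]]; auto; exfalso; apply Hc; eauto. }
  assert (Hincl : incl (map (fun n => Nat.iter n f x) (seq 0 (S (length l)))) l).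
  { intros w Hw. apply in_map_iff in Hw as [i [<- _]]. auto. }
  pose proof (NoDup_incl_length HN Hincl). rewrite length_map, length_seq in H. lia.
Qed.

Definition slide (g : word -> bool) (W : word) : word := tl W ++ [g (tl W)].

Lemma slide_windows g K w0 : length w0 = S K ->
  forall n, Nat.iter n (slide g) w0
            = pref (S K) (shift n (fun m => hd false (Nat.iter m (slide g) w0))).
Proof.
  intros Hw0. set (Ws := fun n => Nat.iter n (slide g) w0).
  assert (Hlen : forall n, length (Ws n) = S K).
  { intros n. apply Nat.iter_invariant; auto. intros [|b u] Hu; simpl in *; [lia|].
    unfold slide. simpl. rewrite length_app. simpl. lia. }
  assert (Hnth : forall t n, (t < S K)%nat -> nth t (Ws n) false = hd false (Ws (n + t)%nat)).
  { induction t as [|t IH]; intros n Ht; [rewrite Nat.add_0_r; destruct (Ws n); reflexivity|].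
    replace (nth (S t) (Ws n) false) with (nth t (Ws (S n)) false).
    - rewrite IH by lia. replace (n + S t)%nat with (S n + t)%nat by lia. reflexivity.
    - pose proof (Hlen n) as Hn. unfold Ws. rewrite Nat.iter_succ. fold (Ws n).
      destruct (Ws n) as [|b u]; simpl in Hn; [lia|]. unfold slide. simpl.
      rewrite app_nth1; auto. lia. }
  intros n. symmetry. apply pref_eq; [apply Hlen|].
  intros j Hj. symmetry. exact (Hnth j n Hj).
Qed.

Lemma filter_length_le1 {A} (f : A -> bool) l : NoDup l ->
  (forall a b, In a l -> In b l -> f a = true -> f b = true -> a = b) ->
  (length (filter f l) <= 1)%nat.
Proof.
  induction l as [|x l IH]; intros Hn H; simpl; [lia|]. inversion Hn; subst.
  destruct (f x) eqn:E.
  - simpl. rewrite filter_nil_In; [simpl; lia|]. intros y Hy. destruct (f y) eqn:Ey; auto.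
    exfalso. assert (x = y) by (apply H; simpl; auto). subst; contradiction.
  - apply IH; auto. intros; apply H; simpl; auto.
Qed.

Lemma filter_length_lt {A} (f g : A -> bool) l x :
  (forall y, In y l -> g y = true -> f y = true) -> In x l -> f x = true -> g x = false ->
  (length (filter g l) < length (filter f l))%nat.
Proof.
  intros H Hx Hf Hg. induction l as [|y l IH]; [destruct Hx|]. simpl.
  assert (Hle : forall l', (forall y, In y l' -> g y = true -> f y = true) ->
                           (length (filter g l') <= length (filter f l'))%nat).
  { induction l' as [|z l' IH']; intros H'; simpl; [lia|].
    specialize (IH' (fun y Hy => H' y (in_cons _ _ _ Hy))).
    destruct (g z) eqn:Eg; [rewrite (H' z (in_eq _ _) Eg); simpl; lia|destruct (f z); simpl; lia]. }
  destruct Hx as [<-|Hx].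
  - rewrite Hf, Hg. simpl. specialize (Hle l (fun y Hy => H y (in_cons _ _ _ Hy))). lia.
  - specialize (IH (fun y Hy => H y (in_cons _ _ _ Hy)) Hx).
    destruct (g y) eqn:Eg; [rewrite (H y (in_eq _ _) Eg); simpl; lia|destruct (f y); simpl; lia].
Qed.

Lemma argmin_exists (l : list nat) (g : nat -> R) :
  l <> [] -> exists m, In m l /\ forall m', In m' l -> g m <= g m'.
Proof.
  induction l as [|x l IH]; intros Hl; [congruence|]. destruct l as [|y l'].
  - exists x. split; [apply in_eq|]. intros m' [<-|[]]; lra.
  - destruct IH as [m [Hm Hmin]]; [congruence|]. destruct (Rle_dec (g x) (g m)).
    + exists x. split; [apply in_eq|]. intros m' [<-|Hm']; [lra|]. specialize (Hmin m' Hm'); lra.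
    + exists m. split; [apply in_cons; auto|]. intros m' [<-|Hm']; [lra|auto].
Qed.

Lemma occ_le1 c p K :
  (forall a b, (a < p)%nat -> (b < p)%nat -> pref K (shift a c) = pref K (shift b c) -> a = b) ->
  forall w, length w = K -> (occ c p w <= 1)%nat.
Proof.
  intros Hinj w Hw. apply filter_length_le1; [apply seq_NoDup|].
  intros a b Ha Hb Hfa Hfb. apply in_seq in Ha, Hb. apply matches_at_pref in Hfa, Hfb.
  apply Hinj; try lia. rewrite <- Hw, Hfa, Hfb. reflexivity.
Qed.

(* A deterministic walk on finitely many windows is eventually periodic. *)
Lemma slide_cycle g K w0 : (forall n, In (Nat.iter n (slide g) w0) (words (S K))) ->
  exists c p i, min_period c p /\
    (forall m, Nat.iter (m + i) (slide g) w0 = pref (S K) (shift m c)) /\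
    (forall a b, (a < p)%nat -> (b < p)%nat ->
       pref (S K) (shift a c) = pref (S K) (shift b c) -> a = b).
Proof.
  intros Hin. set (Ws := fun n => Nat.iter n (slide g) w0).
  set (x := fun m => hd false (Ws m)).
  assert (Hwin : forall n, Ws n = pref (S K) (shift n x))
    by (apply slide_windows, (In_words_length _ _ (Hin 0%nat))).
  destruct (iter_repeats (slide g) w0 (words (S K)) Hin) as [i [j [Hij HWij]]].
  assert (Hshift : forall t, Ws (t + i)%nat = Ws (t + j)%nat)
    by (intros t; unfold Ws; rewrite !Nat.iter_add; f_equal; auto).
  set (c := shift i x).
  assert (Hcp : periodic c (j - i)).
  { intros t. unfold c, shift, x. replace (i + (t + (j - i)))%nat with (t + j)%nat by lia.
    rewrite <- Hshift. f_equal. f_equal. lia. }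
  destruct (exists_min_period c (j - i) ltac:(lia) Hcp) as [p Hmp].
  assert (Hc : forall m, Ws (m + i)%nat = pref (S K) (shift m c)).
  { intros m. rewrite Hwin. apply pref_ext. intros t _. unfold c, shift. f_equal; lia. }
  exists c, p, i. split; [auto|]. split; [exact Hc|].
  intros a b Ha Hb Hab. rewrite <- !Hc in Hab. apply (min_period_shift_inj c p); auto.
  intros t. assert (Hab' : Ws (t + a + i)%nat = Ws (t + b + i)%nat).
  { unfold Ws in Hab |- *.
    rewrite <- !Nat.add_assoc, (Nat.iter_add t (a + i)), (Nat.iter_add t (b + i)), Hab.
    reflexivity. }
  rewrite !Hc in Hab'. apply (f_equal (hd false)) in Hab'. unfold pref in Hab'. simpl in Hab'.
  unfold shift in Hab'. rewrite !Nat.add_0_r, !(Nat.add_comm t) in Hab'. exact Hab'.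
Qed.

Section DeBruijnCycle.
Variables (k : nat) (rho : word -> R).
Hypothesis Hr : right_consistent rho.
Hypothesis Hl : left_consistent rho.
Hypothesis Hnn : forall w, In w (words (S k)) -> 0 <= rho w.

Definition heavy_next (u : word) : bool := if Rlt_dec 0 (rho (u ++ [false])) then false else true.

(* [rho u >= rho (b :: u) > 0] splits as [rho (u ++ [false]) + rho (u ++ [true])]. *)
Lemma slide_heavy_pos W : In W (words (S k)) -> 0 < rho W ->
  In (slide heavy_next W) (words (S k)) /\ 0 < rho (slide heavy_next W).
Proof.
  intros HW Hpos. pose proof (In_words_length _ _ HW) as Hlen.
  destruct W as [|b u]; simpl in Hlen; [lia|]. injection Hlen as Hlen.
  unfold slide, heavy_next. simpl tl.
  split; [apply In_words; rewrite length_app; simpl; lia|].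
  assert (rho (b :: u) <= rho u).
  { rewrite (Hl u). pose proof (Hnn (false :: u)). pose proof (Hnn (true :: u)).
    destruct b; [assert (0 <= rho (false :: u))|assert (0 <= rho (true :: u))];
      try (apply Hnn, In_words; simpl; lia); lra. }
  destruct (Rlt_dec 0 (rho (u ++ [false]))); auto.
  pose proof (Hr u). lra.
Qed.

Lemma cycle_component w0 : In w0 (words (S k)) -> 0 < rho w0 ->
  exists c p A, min_period c p /\ 0 < A /\
    (forall w, In w (words (S k)) -> A * INR (occ c p w) <= rho w) /\
    (exists w1, In w1 (words (S k)) /\ 0 < rho w1 /\ rho w1 = A * INR (occ c p w1)).
Proof.
  intros Hw0 Hp0.
  assert (HWs : forall n, In (Nat.iter n (slide heavy_next) w0) (words (S k)) /\
                          0 < rho (Nat.iter n (slide heavy_next) w0)).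
  { intros n. apply (Nat.iter_invariant n _ _ (fun W => In W (words (S k)) /\ 0 < rho W)); auto.
    intros W [HW HW']. apply slide_heavy_pos; auto. }
  destruct (slide_cycle heavy_next k w0 (fun n => proj1 (HWs n))) as (c & p & i & Hmp & Hc & Hinj).
  pose proof Hmp as (Hp & _).
  set (W := fun m => pref (S k) (shift m c)).
  assert (HW : forall m, In (W m) (words (S k)) /\ 0 < rho (W m))
    by (intros m; unfold W; rewrite <- Hc; apply HWs).
  pose proof (occ_le1 c p (S k) Hinj) as Hocc1.
  destruct (argmin_exists (seq 0 p) (fun m => rho (W m))) as [ms [Hms Hmin]];
    [destruct p; [lia|discriminate]|].
  apply in_seq in Hms.
  assert (Hocc_ms : occ c p (W ms) = 1%nat).
  { apply Nat.le_antisymm; [apply Hocc1, pref_length|].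
    unfold occ. destruct (filter (fun t => matches_at c t (W ms)) (seq 0 p)) eqn:Ef; [|simpl; lia].
    assert (In ms (filter (fun t => matches_at c t (W ms)) (seq 0 p))); [|rewrite Ef in H; destruct H].
    apply filter_In. split; [apply in_seq; lia|]. apply matches_at_pref.
    unfold W. rewrite pref_length. reflexivity. }
  exists c, p, (rho (W ms)). split; [auto|]. split; [apply HW|]. split.
  - intros w Hw. pose proof (Hocc1 w (In_words_length _ _ Hw)) as Hle.
    destruct (occ c p w) as [|[|]] eqn:E; [simpl; rewrite Rmult_0_r; auto|simpl; rewrite Rmult_1_r|lia].
    unfold occ in E. destruct (filter (fun t => matches_at c t w) (seq 0 p)) as [|m l] eqn:Ef;
      [discriminate|].
    assert (Hm : In m (filter (fun t => matches_at c t w) (seq 0 p))) by (rewrite Ef; apply in_eq).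
    apply filter_In in Hm as [Hm Hmw]. apply matches_at_pref in Hmw.
    rewrite (In_words_length _ _ Hw) in Hmw. rewrite <- Hmw. apply Hmin. auto.
  - exists (W ms). split; [apply HW|]. split; [apply HW|].
    rewrite Hocc_ms. simpl. ring.
Qed.

End DeBruijnCycle.

Section BlockDecomposition.
Variables (k : nat) (mu : word -> R).
Hypothesis Hti : is_ti_prob mu.

Definition block_support n a c per :=
  filter (fun w => if Req_EM_T (mu w - bpc_comb n a c per w) 0 then false else true) (words (S k)).

Lemma block_decomposition_step n a c per w0 :
  bpc_family n a c per -> (forall w, In w (words (S k)) -> 0 <= mu w - bpc_comb n a c per w) ->
  In w0 (words (S k)) -> mu w0 - bpc_comb n a c per w0 <> 0 ->
  exists A d p,
    let a' := fsnoc a n (INR p * A) in let c' := fsnoc c n d in let per' := fsnoc per n p in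
    (length (block_support (S n) a' c' per') < length (block_support n a c per))%nat /\
    bpc_family (S n) a' c' per' /\
    (forall w, In w (words (S k)) -> 0 <= mu w - bpc_comb (S n) a' c' per' w).
Proof.
  intros Hfam Hres Hw0 Hne. pose proof Hti as (_ & _ & Hmu_r & Hmu_l).
  set (rho := fun w => mu w - bpc_comb n a c per w).
  assert (Hpos : 0 < rho w0) by (pose proof (Hres w0 Hw0); unfold rho; lra).
  destruct (cycle_component k rho (residual_right_consistent n a c per mu Hmu_r)
              (residual_left_consistent n a c per Hfam mu Hmu_l) Hres w0 Hw0 Hpos)
    as (d & p & A & Hmp & HA & Hocc & w1 & Hw1 & Hrho1 & Hrho1_eq).
  pose proof Hmp as (Hp & _).
  exists A, d, p. cbv zeta.
  assert (Hcomb : forall w, bpc_comb (S n) (fsnoc a n (INR p * A)) (fsnoc c n d) (fsnoc per n p) w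
                            = bpc_comb n a c per w + A * INR (occ d p w))
    by (intros; apply bpc_comb_snoc; auto).
  split; [|split; [apply bpc_family_snoc; auto|]].
  - unfold block_support. apply filter_length_lt with (x := w1); auto.
    + intros y Hy. rewrite Hcomb. destruct (Req_EM_T (mu y - bpc_comb n a c per y) 0) as [E|E]; auto.
      replace (occ d p y) with 0%nat; simpl INR.
      * destruct (Req_EM_T _ 0); auto. lra.
      * specialize (Hocc y Hy). unfold rho in Hocc. rewrite E in Hocc.
        destruct (occ d p y) as [|m]; auto. rewrite S_INR in Hocc. pose proof (pos_INR m). nra.
    + destruct (Req_EM_T _ 0); auto. unfold rho in Hrho1. lra.
    + rewrite Hcomb. destruct (Req_EM_T _ 0); auto. unfold rho in Hrho1_eq. lra.
  - intros w Hw. rewrite Hcomb. specialize (Hocc w Hw). unfold rho in Hocc. lra.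
Qed.

Lemma block_decomposition :
  exists n a c per, bpc_family n a c per /\ forall w, In w (words (S k)) -> mu w = bpc_comb n a c per w.
Proof.
  assert (Hind : forall m n a c per, (length (block_support n a c per) <= m)%nat ->
            bpc_family n a c per ->
            (forall w, In w (words (S k)) -> 0 <= mu w - bpc_comb n a c per w) ->
            exists n a c per, bpc_family n a c per /\
                              forall w, In w (words (S k)) -> mu w = bpc_comb n a c per w).
  { induction m as [|m IH]; intros n a c per Hm Hfam Hres;
      (destruct (classic (exists w0, In w0 (words (S k)) /\ mu w0 - bpc_comb n a c per w0 <> 0))
        as [[w0 [Hw0 Hne]]|Hall];
       [|exists n, a, c, per; split; auto; intros w Hw; apply NNPP; intros Hc;
         apply Hall; exists w; split; auto; lra]).
    - exfalso. assert (Hin : In w0 (block_support n a c per)).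
      { apply filter_In. split; auto. destruct (Req_EM_T _ 0); [contradiction|auto]. }
      destruct (block_support n a c per); [destruct Hin|simpl in Hm; lia].
    - destruct (block_decomposition_step n a c per w0 Hfam Hres Hw0 Hne)
        as (A & d & p & Hlt & Hfam' & Hres').
      eapply IH; [|exact Hfam'|exact Hres']. lia. }
  apply (Hind _ 0%nat (fun _ => 0) (fun _ _ => false) (fun _ => 1%nat) (le_n _));
    [intros i Hi; exfalso; lia|].
  intros w _. unfold bpc_comb. simpl. pose proof Hti as (_ & Hnn & _). specialize (Hnn w). lra.
Qed.

End BlockDecomposition.

Lemma uniform_lower_bound (l : list nat) (g : nat -> R) :
  (forall i, In i l -> 0 < g i) -> exists del, 0 < del /\ forall i, In i l -> del <= g i.
Proof.
  induction l as [|i0 l IH]; intros H; [exists 1; split; [lra|intros i []]|].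
  destruct IH as [del [Hd Hl]]; [intros; apply H, in_cons; auto|].
  exists (Rmin del (g i0)). split; [apply Rmin_glb_lt; auto; apply H, in_eq|].
  intros i [<-|Hi]; [apply Rmin_r|]. eapply Rle_trans; [apply Rmin_l|auto].
Qed.

Lemma bpc_comb_atoms n a c per : bpc_family n a c per ->
  exists del, 0 < del /\ forall w, bpc_comb n a c per w = 0 \/ del <= bpc_comb n a c per w.
Proof.
  intros Hfam. pose proof (bpc_family_per_pos n a c per Hfam) as Hper.
  destruct (uniform_lower_bound (seq 0 n) (fun i => a i / INR (per i))) as [del [Hdel Hdl]].
  { intros i Hi. apply in_seq in Hi.
    apply Rdiv_lt_0_compat; [apply Hfam; lia|apply lt_0_INR, Hper; lia]. }
  exists del. split; auto. intros w.
  destruct (classic (exists i, In i (seq 0 n) /\ occ (c i) (per i) w <> 0%nat))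
    as [[i [Hi Hocc]]|Hall].
  - right. eapply Rle_trans;
      [|apply (sumR_term_le _ (fun i => a i * bpc_prob (c i) (per i) w) i Hi)].
    + pose proof (Hdl i Hi) as Hd. simpl in Hd.
      rewrite bpc_prob_occ. destruct (occ (c i) (per i) w) as [|m]; [congruence|].
      replace (a i * (INR (S m) / INR (per i))) with (INR (S m) * (a i / INR (per i)))
        by (unfold Rdiv; ring).
      rewrite S_INR. pose proof (pos_INR m). nra.
    + intros j Hj. apply in_seq in Hj.
      apply Rmult_le_pos; [left; apply Hfam; lia|apply bpc_prob_nonneg, Hper; lia].
  - left. apply sumR_zero. intros i Hi. rewrite bpc_prob_occ.
    replace (occ (c i) (per i) w) with 0%nat; [simpl; lra|].
    apply NNPP. intros Hne. apply Hall. eauto.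
Qed.

Lemma atoms_finite_entropy nu del : is_ti_prob nu -> 0 < del ->
  (forall w, nu w = 0 \/ del <= nu w) -> exists t, Un_cv (marg_entropy nu) t.
Proof.
  intros Hti Hdel Hat. pose proof Hti as (Hnil & Hnn & Hr & Hl).
  pose proof (ti_prob_le1 nu Hti) as Hb.
  assert (Hub : has_ub (marg_entropy nu)).
  { exists (- ln del). intros y [j ->]. unfold marg_entropy. rewrite <- sumR_opp.
    eapply Rle_trans; [apply (sumR_le _ _ (fun w => - ln del * nu w))|].
    - intros w _. rewrite Rmult_comm. apply atom_entropy_le; auto.
      destruct (Hat w); [left|right; split]; auto; apply Hb.
    - rewrite sumR_scal, (sumR_words nu Hr), Hnil. lra. }
  destruct (growing_cv _ (marg_entropy_growing nu Hl Hnn) Hub) as [t Ht]. eauto.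
Qed.

Lemma finite_entropy_extension k q mu : is_ti_prob mu -> has_marginal k mu q ->
  exists nu t, is_ti_prob nu /\ has_marginal k nu q /\ has_total_entropy nu (Some t).
Proof.
  intros Hti Hmarg. pose proof Hti as (Hnil & _ & Hr & _).
  destruct (block_decomposition k mu Hti) as (n & a & c & per & Hfam & Heq).
  set (nu := bpc_comb n a c per).
  assert (Hnu_nil : nu nil = 1).
  { rewrite <- (sumR_words nu (bpc_comb_right_consistent n a c per) (S k)), <- Hnil,
      <- (sumR_words mu Hr (S k)).
    apply sumR_ext. intros; symmetry; auto. }
  assert (Hnu_ti : is_ti_prob nu).
  { split; [auto|]. split; [apply bpc_family_comb_nonneg; auto|].
    split; [apply bpc_comb_right_consistent|].
    apply bpc_comb_left_consistent. intros i Hi. apply Hfam; auto. }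
  destruct (bpc_comb_atoms n a c per Hfam) as [del [Hdel Hat]].
  destruct (atoms_finite_entropy nu del Hnu_ti Hdel Hat) as [t Ht].
  exists nu, t. split; auto. split; auto. intros w Hw. unfold nu. rewrite <- Heq; auto.
Qed.

Theorem mainTheorem8 (k : nat) (q : word -> R) (mu : word -> R) (s : option R) :
  (1 <= k)%nat ->
  is_prob_block k q ->
  is_LTI k q ->
  is_ti_prob mu ->
  has_marginal k mu q ->
  has_total_entropy mu s ->
  (forall (nu : word -> R) (t : option R),
      is_ti_prob nu -> has_marginal k nu q -> has_total_entropy nu t ->
      ext_le s t) ->
  is_finite_convex_comb_BPC mu.
Proof.
  intros _ _ _ Hti Hmarg Hent Hmin. destruct s as [L|].
  - apply (partial_decomposition_complete k q mu L Hti Hmarg Hent Hmin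
             (S (length (words (S k)))) 0 (fun _ => 0) (fun _ _ => false) (fun _ => 1%nat));
      [lia|].
    split; [intros i Hi; exfalso; lia|]. split; [intros i j Hi; exfalso; lia|].
    split; [|intros i Hi; exfalso; lia].
    intros w. unfold bpc_comb. simpl. pose proof Hti as (_ & Hnn & _). specialize (Hnn w). lra.
  - exfalso. destruct (finite_entropy_extension k q mu Hti Hmarg) as (nu & t & Hnu & Hnu_marg & Ht).
    exact (Hmin nu (Some t) Hnu Hnu_marg Ht).
Qed.
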